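(* Let $\{r_g\}_{g\in\mathbb{Z}_+}$ be i.i.d. uniform on $[0,1)$, so that $R^N_g=\lfloor Nr_g\rfloor+1$ is uniform on $\{1,\dots,N\}$, and consider the corresponding Wright–Fisher model. Then $C_N:=\sum_{i=1}^N\frac1i\mathbb{P}(R^N_1=i)\sim\frac{\log N}{N}$, and for each $n\in\mathbb{N}$ the ancestral process $\{\Pi^{N,n}_{\lfloor tN/\log N\rfloor}\}_{t\ge0}$ converges, in the sense of finite-dimensional distributions, to the Kingman coalescent restricted to $[n]$ started from the partition into singletons.
   Context: Wright–Fisher model with varying population size: given population sizes $R^N_g\in\{1,\dots,N\}$, each individual of generation $g$ chooses its parent uniformly at random among the individuals of the neighbouring (parental) generation, independently. For a sample of $n$ distinct individuals from a generation of size at least $n$ (labelled $1,\dots,n$), $\Pi^{N,n}_g$ denotes the partition of $[n]$ in which $i$ and $j$ are in the same block iff individuals $i$ and $j$ have a common ancestor $g$ generations back. The Kingman coalescent restricted to $[n]$ is the partition-valued Markov chain in which each pair of blocks merges at rate 1. *)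

From Stdlib Require Import Reals List Arith ZArith.
Import ListNotations.
Open Scope R_scope.

Definition sumR {A : Type} (l : list A) (h : A -> R) : R :=
  fold_right (fun a s => h a + s) 0 l.

(* all lists of length a with entries in {0,...,b-1}
   (= all functions [a] -> [b], 0-indexed) *)
Fixpoint seqs (b a : nat) : list (list nat) :=
  match a with
  | O => [[]]
  | S a' => flat_map (fun x => map (cons x) (seqs b a')) (seq 0 b)
  end.

Fixpoint leqb (l1 l2 : list nat) : bool :=
  match l1, l2 with
  | [], [] => true
  | x :: l1', y :: l2' => andb (Nat.eqb x y) (leqb l1' l2')
  | _, _ => false
  end.

Fixpoint pos (x : nat) (l : list nat) : option nat :=
  match l with
  | [] => None
  | y :: l' => if Nat.eqb x y then Some 0%nat
               else match pos x l' with Some k => Some (S k) | None => None end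
  end.

(* canonical labelling: element i gets the index (in order of first
   appearance) of its label; two positions get the same value iff they
   had the same label. *)
Fixpoint canon_aux (seen : list nat) (l : list nat) : list nat :=
  match l with
  | [] => []
  | x :: l' =>
      match pos x seen with
      | Some k => k :: canon_aux seen l'
      | None => length seen :: canon_aux (seen ++ [x]) l'
      end
  end.
Definition canon (l : list nat) : list nat := canon_aux [] l.

(* the partitions of [n] = {0,..,n-1}, each represented by its restricted
   growth string: i and j are in the same block iff c_i = c_j *)
Definition parts (n : nat) : list (list nat) :=
  filter (fun c => leqb (canon c) c) (seqs n n).

Definition singletons (n : nat) : list nat := seq 0 n.

Definition nblocks (c : list nat) : nat := length (nodup Nat.eq_dec c).

Definition merge (c : list nat) (a b : nat) : list nat :=
  canon (map (fun x => if Nat.eqb x b then a else x) c).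

(* generator: each (unordered) pair of blocks {a,b} (a<b) merges at rate 1 *)
Definition kQ (p q : list nat) : R :=
  let k := nblocks p in
  if leqb p q then - INR (k * (k - 1) / 2)
  else sumR (seq 0 k) (fun b => sumR (seq 0 b)
         (fun a => if leqb (merge p a b) q then 1 else 0)).

Fixpoint kQpow (n j : nat) (p q : list nat) : R :=
  match j with
  | O => if leqb p q then 1 else 0
  | S j' => sumR (parts n) (fun s => kQ p s * kQpow n j' s q)
  end.

Definition kexp_partial (n : nat) (t : R) (p q : list nat) (m : nat) : R :=
  sum_f_R0 (fun j => t ^ j / INR (fact j) * kQpow n j p q) m.

(* finite-dimensional distribution of the Kingman coalescent started at
   singletons, given its transition function P t p q = exp(tQ)_{p,q};
   obs = [(t_1,pi_1); ...; (t_k,pi_k)] with 0 <= t_1 <= ... <= t_k *)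
Fixpoint kfdd (P : R -> list nat -> list nat -> R) (t0 : R) (p0 : list nat)
    (obs : list (R * list nat)) : R :=
  match obs with
  | [] => 1
  | (t, p) :: obs' => P (t - t0) p0 p * kfdd P t p obs'
  end.

Fixpoint times_ok (t0 : R) (obs : list (R * list nat)) : Prop :=
  match obs with
  | [] => True
  | (t, _) :: obs' => t0 <= t /\ times_ok t obs'
  end.

(* law of R^N_g = floor(N r_g) + 1 with r_g uniform on [0,1):
   uniform on {1,...,N} *)
Definition probR (N i : nat) : R :=
  if andb (1 <=? i)%nat (i <=? N)%nat then / INR N else 0.

Definition CN (N : nat) : R := sumR (seq 1 N) (fun i => / INR i * probR N i).

(* Expectation over G generations (backwards in time) of k applied to the
   list of parent maps [f_1; ...; f_G]: generation g >= 1 has size R_g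
   uniform on {1..N} (independently), and each of the R_(g-1) individuals
   of generation g-1 chooses its parent uniformly among the R_g
   individuals of generation g, independently (f_g : [R_(g-1)] -> [R_g],
   individuals 0-indexed). rprev is the size of the current generation. *)
Fixpoint wf_exp (N rprev G : nat) (k : list (list nat) -> R) : R :=
  match G with
  | O => k []
  | S G' =>
      sumR (seq 1 N) (fun r => probR N r *
        sumR (seqs r rprev) (fun f =>
          (/ INR r) ^ rprev * wf_exp N r G' (fun fs => k (f :: fs))))
  end.

Fixpoint anc (fs : list (list nat)) (g i : nat) : nat :=
  match g, fs with
  | O, _ => i
  | S g', f :: fs' => anc fs' g' (nth i f 0%nat)
  | S _, [] => i
  end.

(* Pi^{N,n}_g for the sample 0..n-1 of generation 0, as a restricted growth
   string: i ~ j iff same ancestor g generations back *)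
Definition Pi (fs : list (list nat)) (n g : nat) : list nat :=
  canon (map (anc fs g) (seq 0 n)).

Definition gen_of (N : nat) (t : R) : nat :=
  Z.to_nat (Int_part (t * INR N / ln (INR N))).

Definition horizon (N : nat) (obs : list (R * list nat)) : nat :=
  fold_right (fun o m => Nat.max (gen_of N (fst o)) m) 0%nat obs.

(* P( Pi^{N,n}_{floor(t_i N/log N)} = pi_i for all i ), the sample being
   individuals 0..n-1 of generation 0 of size r0 *)
Definition wf_fdd (N n r0 : nat) (obs : list (R * list nat)) : R :=
  wf_exp N r0 (horizon N obs) (fun fs =>
    if forallb (fun o => leqb (Pi fs n (gen_of N (fst o))) (snd o)) obs
    then 1 else 0).

(* C_N = H_N / N and ln (N+1) <= H_N <= 1 + ln N, so
      C_N ~ ln N / N (the first claim) and C_N -> 0.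
   2. Markov property.  Summing over the parent maps of one generation, any
      function of the induced partition of the sample depends only on the
      current partition p, through [coal_prob r p q]: the probability that the
      blocks of p, choosing parents among r individuals, induce q.  Hence the
      sample partitions form a Markov chain with transition matrix
      [trans N = E (coal_prob R^N)], and the Wright–Fisher finite-dimensional
      law equals a product of matrix powers of [trans N] ([wf_fdd_chain]).
   3. One-step estimate.  Counting injective parent choices and choices with
      exactly one collision gives coal_prob r p q = [p = q] + Q p q / r
      + O(1/r^2), Q the Kingman generator; averaging over r (sum of 1/r^2
      bounded, sum of 1/r = H_N) gives (trans N - I) / C_N -> Q.
   4. Exponential limit.  trans^m = sum_j C(m,j) C_N^j B_N^j with
      B_N = (trans N - I) / C_N; since m C_N -> t for m the number of
      generations between two observation times, Tannery's theorem gives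
      trans^m -> exp (tQ), which yields the Kingman finite-dimensional law. *)

From Pilot Require Import Defs.
From Stdlib Require Import Reals List ListDec Arith ZArith Lia Lra.
Import ListNotations.
Open Scope R_scope.

Lemma leqb_eq l1 l2 : leqb l1 l2 = true <-> l1 = l2.
Proof.
  revert l2; induction l1 as [|x l1 IH]; intros [|y l2]; simpl; split; intro H;
    try discriminate; auto.
  - apply andb_prop in H as [H1 H2]. apply Nat.eqb_eq in H1. apply IH in H2. subst; auto.
  - inversion H; subst. rewrite Nat.eqb_refl, (proj2 (IH l2) eq_refl). auto.
Qed.

Lemma leqb_refl l : leqb l l = true.
Proof. apply leqb_eq; auto. Qed.

Definition indb (b : bool) : R := if b then 1 else 0.

Lemma indb_andb a b : indb (a && b) = indb a * indb b.
Proof. destruct a, b; unfold indb; simpl; lra. Qed.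

Lemma sumR_nil {A} (h : A -> R) : sumR [] h = 0.
Proof. reflexivity. Qed.

Lemma sumR_cons {A} (a : A) l h : sumR (a :: l) h = h a + sumR l h.
Proof. reflexivity. Qed.

Lemma sumR_app {A} (l1 l2 : list A) h : sumR (l1 ++ l2) h = sumR l1 h + sumR l2 h.
Proof. induction l1; simpl; [lra|]. unfold sumR in *; simpl. rewrite IHl1. lra. Qed.

Lemma sumR_ext {A} (l : list A) f g :
  (forall x, In x l -> f x = g x) -> sumR l f = sumR l g.
Proof.
  induction l; intros H; simpl; auto. unfold sumR in *; simpl.
  rewrite H by (left; auto). rewrite IHl; auto. intros; apply H; right; auto.
Qed.

Lemma sumR_plus {A} (l : list A) f g :
  sumR l (fun x => f x + g x) = sumR l f + sumR l g.
Proof. induction l; unfold sumR in *; simpl; [lra|]. rewrite IHl; lra. Qed.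

Lemma sumR_minus {A} (l : list A) f g :
  sumR l (fun x => f x - g x) = sumR l f - sumR l g.
Proof. induction l; unfold sumR in *; simpl; [lra|]. rewrite IHl; lra. Qed.

Lemma sumR_scal {A} (l : list A) c f : sumR l (fun x => c * f x) = c * sumR l f.
Proof. induction l; unfold sumR in *; simpl; [lra|]. rewrite IHl; lra. Qed.

Lemma sumR_scal_r {A} (l : list A) c f : sumR l (fun x => f x * c) = sumR l f * c.
Proof. induction l; unfold sumR in *; simpl; [lra|]. rewrite IHl; lra. Qed.

Lemma sumR_zero {A} (l : list A) : sumR l (fun _ => 0) = 0.
Proof. induction l; unfold sumR in *; simpl; [lra|]. rewrite IHl; lra. Qed.

Lemma sumR_const {A} (l : list A) c : sumR l (fun _ => c) = INR (length l) * c.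
Proof.
  induction l; unfold sumR in *; simpl; [lra|]. rewrite IHl.
  destruct (length l); simpl; lra.
Qed.

Lemma sumR_map {A B} (g : A -> B) l f : sumR (map g l) f = sumR l (fun x => f (g x)).
Proof. induction l; unfold sumR in *; simpl; auto. rewrite IHl; auto. Qed.

Lemma sumR_flat_map {A B} (g : A -> list B) l f :
  sumR (flat_map g l) f = sumR l (fun x => sumR (g x) f).
Proof. induction l; simpl; auto. rewrite sumR_app, IHl. reflexivity. Qed.

Lemma sumR_swap {A B} (l1 : list A) (l2 : list B) f :
  sumR l1 (fun x => sumR l2 (fun y => f x y)) = sumR l2 (fun y => sumR l1 (fun x => f x y)).
Proof.
  induction l1.
  - rewrite sumR_nil. symmetry. apply sumR_zero.
  - rewrite sumR_cons, IHl1, <- sumR_plus. apply sumR_ext. intros; rewrite sumR_cons; auto.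
Qed.

Lemma sumR_le {A} (l : list A) f g :
  (forall x, In x l -> f x <= g x) -> sumR l f <= sumR l g.
Proof.
  induction l; intros H; unfold sumR in *; simpl; [lra|].
  pose proof (H a (or_introl eq_refl)). pose proof (IHl (fun x Hx => H x (or_intror Hx))). lra.
Qed.

Lemma sumR_nonneg {A} (l : list A) f :
  (forall x, In x l -> 0 <= f x) -> 0 <= sumR l f.
Proof. intros. rewrite <- (sumR_zero l). apply sumR_le; auto. Qed.

Lemma sumR_abs {A} (l : list A) f : Rabs (sumR l f) <= sumR l (fun x => Rabs (f x)).
Proof.
  induction l; unfold sumR in *; simpl. rewrite Rabs_R0; lra.
  eapply Rle_trans. apply Rabs_triang. lra.
Qed.

Lemma sumR_single_le {A} (l : list A) f x :
  In x l -> (forall y, In y l -> 0 <= f y) -> f x <= sumR l f.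
Proof.
  induction l as [|a l IHl]; intros Hx H; [destruct Hx|].
  rewrite sumR_cons. destruct Hx as [<-|Hx].
  - assert (0 <= sumR l f) by (apply sumR_nonneg; intros; apply H; right; auto). lra.
  - assert (f x <= sumR l f) by (apply IHl; auto; intros; apply H; right; auto).
    assert (0 <= f a) by (apply H; left; auto). lra.
Qed.

Lemma sumR_indicator_le1 {A} (l : list A) (P : A -> bool) :
  NoDup l -> (forall x y, In x l -> In y l -> P x = true -> P y = true -> x = y) ->
  sumR l (fun x => indb (P x)) <= 1.
Proof.
  induction l; intros ND H. rewrite sumR_nil; lra.
  rewrite sumR_cons. inversion ND; subst.
  destruct (P a) eqn:E; unfold indb at 1.
  - rewrite sumR_ext with (g := fun _ => 0). rewrite sumR_zero; lra.
    intros x Hx. destruct (P x) eqn:E2; unfold indb; auto.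
    exfalso. assert (x = a) by (apply H; simpl; auto). subst; auto.
  - assert (sumR l (fun x => indb (P x)) <= 1); [|lra].
    apply IHl; auto. intros; apply H; simpl; auto.
Qed.

Lemma sumR_delta {A} (l : list A) (eqd : forall x y : A, {x = y} + {x <> y}) x0 f :
  NoDup l -> In x0 l -> sumR l (fun x => if eqd x0 x then f x else 0) = f x0.
Proof.
  induction l; intros ND Hin; inversion Hin; inversion ND; subst; rewrite sumR_cons.
  - destruct (eqd x0 x0); [|congruence].
    rewrite sumR_ext with (g := fun _ => 0). rewrite sumR_zero; lra.
    intros x Hx. destruct (eqd x0 x); auto. subst; contradiction.
  - destruct (eqd x0 a). subst; contradiction. rewrite IHl; auto. lra.
Qed.

Lemma sumR_delta_leqb (l : list (list nat)) x0 f :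
  NoDup l -> In x0 l -> sumR l (fun x => indb (leqb x0 x) * f x) = f x0.
Proof.
  intros. rewrite <- (sumR_delta l (list_eq_dec Nat.eq_dec) x0 f); auto.
  apply sumR_ext; intros x _. unfold indb.
  destruct (list_eq_dec Nat.eq_dec x0 x).
  - subst. rewrite leqb_refl. lra.
  - destruct (leqb x0 x) eqn:E. apply leqb_eq in E; contradiction. lra.
Qed.

Lemma sumR_delta_leqb' (l : list (list nat)) x0 f :
  NoDup l -> In x0 l -> sumR l (fun x => indb (leqb x x0) * f x) = f x0.
Proof.
  intros. rewrite <- (sumR_delta_leqb l x0 f); auto. apply sumR_ext; intros x _.
  destruct (leqb x x0) eqn:E; destruct (leqb x0 x) eqn:E2; auto;
    [apply leqb_eq in E | apply leqb_eq in E2]; subst;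
    rewrite leqb_refl in *; discriminate.
Qed.

Lemma sumR_seq_last k (f : nat -> R) : sumR (seq 0 (S k)) f = sumR (seq 0 k) f + f k.
Proof. rewrite seq_S, sumR_app, sumR_cons, sumR_nil. simpl. ring. Qed.

Lemma sum_f_R0_sumR f k : sum_f_R0 f k = sumR (seq 0 (S k)) f.
Proof.
  induction k. cbn [sum_f_R0 seq]. rewrite sumR_cons, sumR_nil; ring.
  rewrite sumR_seq_last, <- IHk. simpl. ring.
Qed.

Lemma Rdiv_le_0_compat a b : 0 <= a -> 0 < b -> 0 <= a / b.
Proof. intros. unfold Rdiv. apply Rmult_le_pos; auto. left; apply Rinv_0_lt_compat; auto. Qed.

Lemma Rdiv_le_1 a b : 0 < b -> a <= b -> a / b <= 1.
Proof. intros. unfold Rdiv. apply Rmult_le_reg_r with b; auto. rewrite Rmult_assoc, Rinv_l by lra. lra. Qed.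

Lemma nth_map_lt {A B} (f : A -> B) l d d0 i :
  (i < length l)%nat -> nth i (map f l) d = f (nth i l d0).
Proof. intros. rewrite (nth_indep _ d (f d0)) by (rewrite length_map; auto). apply map_nth. Qed.

Lemma forallb_ext_in {A} (f g : A -> bool) l :
  (forall x, In x l -> f x = g x) -> forallb f l = forallb g l.
Proof.
  induction l; intros H; simpl; auto. rewrite H by (left; auto). rewrite IHl; auto.
  intros; apply H; right; auto.
Qed.

Lemma eventually_list {X} (l : list X) (P : X -> nat -> Prop) :
  (forall x, In x l -> exists N0, forall N, (N0 <= N)%nat -> P x N) ->
  exists N0, forall x N, In x l -> (N0 <= N)%nat -> P x N.
Proof.
  induction l; intros H. exists 0%nat. intros x N [].
  destruct (H a (or_introl eq_refl)) as [N1 H1].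
  destruct IHl as [N2 H2]. intros; apply H; right; auto.
  exists (Nat.max N1 N2). intros x N [<-|Hx] HN. apply H1; lia. apply H2; auto; lia.
Qed.

Lemma Un_cv_eventually (u v : nat -> R) l N0 :
  (forall N, (N0 <= N)%nat -> u N = v N) -> Un_cv v l -> Un_cv u l.
Proof.
  intros E H eps He. destruct (H eps He) as [N1 HN1]. exists (Nat.max N0 N1). intros N HN.
  rewrite E by lia. apply HN1. lia.
Qed.

Lemma Un_cv_const c : Un_cv (fun _ => c) c.
Proof. intros eps He; exists 0%nat; intros; unfold Rdist; rewrite Rminus_diag, Rabs_R0; lra. Qed.

Lemma CV_sumR {X} (l : list X) (f : nat -> X -> R) g :
  (forall x, In x l -> Un_cv (fun N => f N x) (g x)) -> Un_cv (fun N => sumR l (f N)) (sumR l g).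
Proof.
  induction l; intros H.
  - rewrite sumR_nil. apply Un_cv_ext with (fun _ => 0); [reflexivity|apply Un_cv_const].
  - rewrite sumR_cons. apply Un_cv_ext with (fun N => f N a + sumR l (f N)).
    intros; rewrite sumR_cons; auto.
    apply CV_plus. apply H; left; auto. apply IHl; intros; apply H; right; auto.
Qed.

Lemma in_seqs r k h : In h (seqs r k) <-> length h = k /\ (forall x, In x h -> (x < r)%nat).
Proof.
  revert h; induction k; intros h; simpl.
  - split. intros [<-|[]]; simpl; split; auto; intros _ [].
    intros [H _]. destruct h; simpl in H; auto; discriminate.
  - rewrite in_flat_map. split.
    + intros [x [Hx Hm]]. apply in_map_iff in Hm as [h' [<- Hh']].
      apply IHk in Hh' as [L A]. apply in_seq in Hx. simpl. split; [lia|].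
      intros y [<-|Hy]; [lia|auto].
    + intros [L A]. destruct h as [|x h']; simpl in L; [discriminate|].
      exists x; split. apply in_seq. specialize (A x (or_introl eq_refl)); lia.
      apply in_map. apply IHk. split. lia. intros; apply A; right; auto.
Qed.

Lemma NoDup_seqs r k : NoDup (seqs r k).
Proof.
  induction k; simpl. constructor; auto. constructor.
  assert (forall l : list nat, NoDup l -> NoDup (flat_map (fun x => map (cons x) (seqs r k)) l)).
  { induction l; intros ND; simpl. constructor. inversion ND; subst.
    apply NoDup_app; auto.
    - apply NoDup_map_NoDup_ForallPairs; auto. intros ? ? ? ? E; inversion E; auto.
    - intros h G1 G2. apply in_map_iff in G1 as [? [<- _]].
      apply in_flat_map in G2 as [y [Hy G2]]. apply in_map_iff in G2 as [? [E _]].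
      inversion E; subst; contradiction. }
  apply H, seq_NoDup.
Qed.

Lemma sumR_seqs_S r k f :
  sumR (seqs r (S k)) f = sumR (seq 0 r) (fun x => sumR (seqs r k) (fun h => f (x :: h))).
Proof. simpl. rewrite sumR_flat_map. apply sumR_ext; intros. apply sumR_map. Qed.

Lemma sumR_seqs_const r k c : sumR (seqs r k) (fun _ => c) = INR r ^ k * c.
Proof.
  induction k. simpl. unfold sumR; simpl. lra.
  rewrite sumR_seqs_S, sumR_ext with (g := fun _ => INR r ^ k * c) by auto.
  rewrite sumR_const, length_seq. simpl. lra.
Qed.

Definition ins {A} (b : nat) (x : A) (h : list A) := firstn b h ++ x :: skipn b h.
Definition del {A} (b : nat) (h : list A) := firstn b h ++ skipn (S b) h.

Lemma sumR_seqs_ins b k r F : (b <= k)%nat ->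
  sumR (seqs r (S k)) F = sumR (seqs r k) (fun h => sumR (seq 0 r) (fun x => F (ins b x h))).
Proof.
  revert k F; induction b; intros k F Hb.
  - rewrite sumR_seqs_S, sumR_swap. reflexivity.
  - destruct k as [|k]; [lia|]. rewrite sumR_seqs_S.
    rewrite sumR_ext with (g := fun y => sumR (seqs r k)
        (fun h' => sumR (seq 0 r) (fun x => F (y :: ins b x h')))).
    2:{ intros y _. apply (IHb k (fun h => F (y :: h))). lia. }
    rewrite sumR_seqs_S. reflexivity.
Qed.

Lemma del_ins {A} b (x : A) h : (b <= length h)%nat -> del b (ins b x h) = h.
Proof.
  intros Hb. unfold del, ins.
  assert (L : length (firstn b h) = b) by (apply firstn_length_le; auto).
  rewrite firstn_app, L, Nat.sub_diag, firstn_O, app_nil_r, firstn_all2 by lia.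
  rewrite skipn_app, L, skipn_all2 by lia.
  replace (S b - b)%nat with 1%nat by lia. simpl. apply firstn_skipn.
Qed.

Lemma nth_ins_b {A} b (x : A) h d : (b <= length h)%nat -> nth b (ins b x h) d = x.
Proof.
  intros. unfold ins. rewrite app_nth2; rewrite firstn_length_le; auto. rewrite Nat.sub_diag. auto.
Qed.

Lemma nth_ins_lt {A} b (x : A) h a d :
  (a < b)%nat -> (b <= length h)%nat -> nth a (ins b x h) d = nth a h d.
Proof.
  intros. unfold ins. rewrite app_nth1 by (rewrite firstn_length_le; lia).
  rewrite nth_firstn. destruct (a <? b)%nat eqn:E; auto. apply Nat.ltb_ge in E; lia.
Qed.

Lemma nth_del {A} b (h : list A) i d :
  nth i (del b h) d = if (i <? b)%nat then nth i h d else nth (S i) h d.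
Proof.
  unfold del. destruct (Nat.ltb_spec i b); destruct (le_lt_dec b (length h)).
  - rewrite app_nth1 by (rewrite firstn_length_le; lia). rewrite nth_firstn.
    destruct (Nat.ltb_spec i b); [auto|lia].
  - rewrite firstn_all2, skipn_all2, app_nil_r by lia; auto.
  - rewrite app_nth2 by (rewrite firstn_length_le; lia). rewrite firstn_length_le by lia.
    rewrite nth_skipn. f_equal. lia.
  - rewrite firstn_all2, skipn_all2, app_nil_r by lia. rewrite !nth_overflow; auto; lia.
Qed.

Lemma del_inj {A} b (h : list A) d : (b < length h)%nat -> NoDup (del b h) ->
  forall x y, (x < length h)%nat -> (y < length h)%nat -> x <> b -> y <> b ->
  nth x h d = nth y h d -> x = y.
Proof.
  intros Hb ND x y Hx Hy Hxb Hyb E.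
  assert (Ld : length (del b h) = pred (length h))
    by (unfold del; rewrite length_app, firstn_length_le, length_skipn; lia).
  rewrite (NoDup_nth _ d), Ld in ND.
  set (f := fun z => if (z <? b)%nat then z else pred z).
  assert (Hf : forall z, (z < length h)%nat -> z <> b ->
            nth (f z) (del b h) d = nth z h d /\ (f z < pred (length h))%nat).
  { intros z Hz Hzb. unfold f. rewrite nth_del. destruct (Nat.ltb_spec z b).
    - destruct (Nat.ltb_spec z b); [split; auto; lia|lia].
    - destruct (Nat.ltb_spec (pred z) b); [lia|]. split; [f_equal; lia|lia]. }
  destruct (Hf x Hx Hxb) as [A1 B1]. destruct (Hf y Hy Hyb) as [A2 B2].
  assert (f x = f y) by (apply ND; auto; congruence).
  unfold f in H. destruct (Nat.ltb_spec x b); destruct (Nat.ltb_spec y b); lia.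
Qed.

Definition select (f u : list nat) : list nat := map (fun i => nth i f 0%nat) u.

Lemma select_cons_absent x f u :
  ~ In 0%nat u -> select (x :: f) u = select f (map pred u).
Proof.
  intros H0. unfold select. rewrite map_map. apply map_ext_in.
  intros [|i] Hi; [contradiction|reflexivity].
Qed.

Lemma select_cons_present x f u1 u2 : ~ In 0%nat (u1 ++ u2) ->
  select (x :: f) (u1 ++ 0%nat :: u2) = ins (length u1) x (select f (map pred (u1 ++ u2))).
Proof.
  intros H0.
  assert (E : select f (map pred (u1 ++ u2)) = select (x :: f) u1 ++ select (x :: f) u2).
  { rewrite map_app. unfold select at 1. rewrite map_app. fold (select f (map pred u1)).
    fold (select f (map pred u2)).
    rewrite <- !select_cons_absent with (x := x) by (intro; apply H0, in_or_app; auto).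
    reflexivity. }
  rewrite E. unfold select at 1. rewrite map_app. simpl. fold (select (x :: f) u1).
  replace (length u1) with (length (select (x :: f) u1)) by apply length_map.
  unfold ins. rewrite firstn_app, skipn_app, Nat.sub_diag, firstn_all, skipn_all. simpl.
  rewrite app_nil_r. reflexivity.
Qed.

Lemma pred_positions m u : NoDup u -> ~ In 0%nat u -> (forall x, In x u -> (x < S m)%nat) ->
  NoDup (map pred u) /\ (forall x, In x (map pred u) -> (x < m)%nat).
Proof.
  intros ND H0 Hu. split.
  - apply NoDup_map_NoDup_ForallPairs; auto. intros x y Hx Hy E.
    assert (x <> 0%nat) by (intros ->; auto). assert (y <> 0%nat) by (intros ->; auto). lia.
  - intros x Hx. apply in_map_iff in Hx as [y [<- Hy]].
    assert (y <> 0%nat) by (intros ->; auto). specialize (Hu y Hy). lia.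
Qed.

Lemma NoDup_length_bound m u : NoDup u -> (forall x, In x u -> (x < m)%nat) -> (length u <= m)%nat.
Proof.
  intros ND Hu. apply NoDup_incl_length with (l' := seq 0 m) in ND.
  rewrite length_seq in ND; auto. intros x Hx; apply in_seq; specialize (Hu x Hx); lia.
Qed.

Lemma sumR_select m u (psi : list nat -> R) r :
  NoDup u -> (forall x, In x u -> (x < m)%nat) ->
  sumR (seqs r m) (fun f => psi (select f u)) = INR r ^ (m - length u) * sumR (seqs r (length u)) psi.
Proof.
  revert u psi; induction m; intros u psi ND Hu.
  - destruct u as [|x u]. simpl. unfold sumR; simpl; lra.
    specialize (Hu x (or_introl eq_refl)); lia.
  - rewrite sumR_seqs_S. destruct (in_dec Nat.eq_dec 0%nat u) as [H0|H0].
    + apply in_split in H0 as [u1 [u2 ->]].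
      assert (ND' : NoDup (u1 ++ u2)) by (eapply NoDup_remove_1; eauto).
      assert (H0' : ~ In 0%nat (u1 ++ u2)) by (eapply NoDup_remove_2; eauto).
      destruct (pred_positions m (u1 ++ u2)) as [NDu' Hu']; auto.
      { intros x Hx. apply Hu. apply in_app_or in Hx as [?|?]; apply in_or_app; simpl; auto. }
      set (u' := map pred (u1 ++ u2)) in *.
      assert (Lu : length (u1 ++ 0%nat :: u2) = S (length u'))
        by (unfold u'; rewrite length_map, !length_app; simpl; lia).
      rewrite sumR_ext with (g := fun x => INR r ^ (m - length u') *
          sumR (seqs r (length u')) (fun h => psi (ins (length u1) x h))).
      2:{ intros x _. rewrite <- IHm; auto. apply sumR_ext. intros f' _.
          rewrite select_cons_present; auto. }
      rewrite sumR_scal, Lu. simpl (S m - S _)%nat. f_equal.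
      rewrite sumR_swap. symmetry. apply sumR_seqs_ins.
      unfold u'. rewrite length_map, length_app. lia.
    + destruct (pred_positions m u) as [NDu' Hu']; auto.
      pose proof (NoDup_length_bound m _ NDu' Hu') as Km. rewrite length_map in Km.
      rewrite sumR_ext with (g := fun x => INR r ^ (m - length u) * sumR (seqs r (length u)) psi).
      2:{ intros x _. rewrite <- (length_map pred u), <- IHm; auto.
          apply sumR_ext. intros f' _. rewrite select_cons_absent; auto. }
      rewrite sumR_const, length_seq.
      replace (S m - length u)%nat with (S (m - length u)) by lia. simpl. lra.
Qed.

Fixpoint ffn (r k : nat) : nat :=
  match k with O => 1%nat | S k' => (ffn r k' * (r - k'))%nat end.

Lemma count_members r h : NoDup h -> (forall x, In x h -> (x < r)%nat) ->
  sumR (seq 0 r) (fun x => if in_dec Nat.eq_dec x h then 1 else 0) = INR (length h).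
Proof.
  induction h as [|y h IH]; intros ND Hh.
  - simpl. rewrite sumR_zero; auto.
  - inversion ND; subst.
    rewrite sumR_ext with (g := fun x => (if Nat.eq_dec y x then 1 else 0) +
                                        (if in_dec Nat.eq_dec x h then 1 else 0)).
    + rewrite sumR_plus, IH, sumR_delta by (auto using seq_NoDup;
        try (apply in_seq; specialize (Hh y (or_introl eq_refl)); lia);
        intros; apply Hh; right; auto).
      rewrite length_cons, S_INR. lra.
    + intros x _. destruct (Nat.eq_dec y x) as [<-|Hyx].
      * destruct (in_dec Nat.eq_dec y (y :: h)) as [_|N]; [|simpl in N; tauto].
        destruct (in_dec Nat.eq_dec y h); [contradiction|lra].
      * destruct (in_dec Nat.eq_dec x (y :: h)) as [I|I]; destruct (in_dec Nat.eq_dec x h);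
          simpl in I; try lra; intuition.
Qed.

Lemma count_injective r k :
  sumR (seqs r k) (fun h => if NoDup_dec Nat.eq_dec h then 1 else 0) = INR (ffn r k).
Proof.
  induction k.
  - unfold seqs. rewrite sumR_cons, sumR_nil. destruct (NoDup_dec Nat.eq_dec []) as [|n]; simpl. lra.
    exfalso; apply n; constructor.
  - rewrite sumR_seqs_S, sumR_swap. simpl ffn. rewrite mult_INR, <- IHk, <- sumR_scal_r.
    apply sumR_ext. intros h Hh. apply in_seqs in Hh as [L Hr].
    destruct (NoDup_dec Nat.eq_dec h) as [ND|ND].
    + pose proof (NoDup_length_bound r h ND Hr) as Kr.
      rewrite sumR_ext with (g := fun x => 1 - (if in_dec Nat.eq_dec x h then 1 else 0)).
      * rewrite sumR_minus, sumR_const, count_members, length_seq, L, minus_INR by (auto; lia). lra.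
      * intros x _. destruct (NoDup_dec Nat.eq_dec (x :: h)) as [N2|N2];
          destruct (in_dec Nat.eq_dec x h) as [I|I]; try lra.
        -- inversion N2; contradiction.
        -- exfalso; apply N2; constructor; auto.
    + rewrite sumR_ext with (g := fun _ => 0). rewrite sumR_zero; lra.
      intros x _. destruct (NoDup_dec Nat.eq_dec (x :: h)) as [N2|N2]; auto.
      inversion N2; contradiction.
Qed.

Definition single_collision (h : list nat) (a b : nat) : bool :=
  Nat.eqb (nth a h 0%nat) (nth b h 0%nat) && (if NoDup_dec Nat.eq_dec (del b h) then true else false).

Lemma single_collision_spec h a b :
  single_collision h a b = true <-> nth a h 0%nat = nth b h 0%nat /\ NoDup (del b h).
Proof.
  unfold single_collision. rewrite Bool.andb_true_iff, Nat.eqb_eq.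
  destruct (NoDup_dec Nat.eq_dec (del b h)); split; intuition; discriminate.
Qed.

Lemma single_collision_unique h a b a' b' :
  (a < b)%nat -> (b < length h)%nat -> (a' < b')%nat -> (b' < length h)%nat ->
  single_collision h a b = true -> single_collision h a' b' = true -> a = a' /\ b = b'.
Proof.
  intros H1 H2 H3 H4 K1 K2.
  apply single_collision_spec in K1 as [E1 N1]. apply single_collision_spec in K2 as [E2 N2].
  assert (Hb : b = b').
  { destruct (Nat.eq_dec b b') as [|Hne]; auto. exfalso.
    destruct (Nat.eq_dec a' b) as [Ea|Ea].
    - subst a'. assert (a = b') by (apply (del_inj b h 0%nat); try lia; try congruence; auto). lia.
    - assert (a' = b') by (apply (del_inj b h 0%nat); try lia; auto). lia. }
  subst b'. split; auto. apply (del_inj b h 0%nat); try lia; try congruence; auto.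
Qed.

Lemma count_single_collision r k a b : (a < b)%nat -> (b < S k)%nat ->
  sumR (seqs r (S k)) (fun h => indb (single_collision h a b)) = INR (ffn r k).
Proof.
  intros Hab Hb. rewrite (sumR_seqs_ins b k) by lia. rewrite <- count_injective.
  apply sumR_ext. intros h Hh. apply in_seqs in Hh as [L Hr].
  rewrite sumR_ext with (g := fun x => (if Nat.eq_dec (nth a h 0%nat) x then 1 else 0) *
                                     (if NoDup_dec Nat.eq_dec h then 1 else 0)).
  - rewrite sumR_scal_r, sumR_delta. lra. apply seq_NoDup.
    assert (Ha : (a < length h)%nat) by lia.
    apply in_seq. specialize (Hr _ (nth_In h 0%nat Ha)). lia.
  - intros x _. unfold single_collision, indb.
    rewrite nth_ins_lt, nth_ins_b, del_ins by lia.
    destruct (Nat.eq_dec (nth a h 0%nat) x) as [E|E];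
      [rewrite (proj2 (Nat.eqb_eq _ _) E) | rewrite (proj2 (Nat.eqb_neq _ _) E)]; simpl;
      destruct (NoDup_dec Nat.eq_dec h); lra.
Qed.

Fixpoint labels_from (seen l : list nat) : list nat :=
  match l with
  | [] => seen
  | x :: l' => match Defs.pos x seen with
               | Some _ => labels_from seen l'
               | None => labels_from (seen ++ [x]) l'
               end
  end.

Definition labels (l : list nat) : list nat := labels_from [] l.

Definition label_index (x : nat) (u : list nat) : nat :=
  match Defs.pos x u with Some k => k | None => 0%nat end.

Lemma pos_none x s : Defs.pos x s = None <-> ~ In x s.
Proof.
  induction s as [|y s IH]; simpl. split; auto.
  destruct (Nat.eqb_spec x y).
  - subst. split; [discriminate|]. intros H; exfalso; auto.
  - destruct (Defs.pos x s) eqn:E.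
    + split; [discriminate|]. intros H. exfalso. apply H. right.
      destruct (In_dec Nat.eq_dec x s) as [i|i]; auto. apply IH in i. discriminate.
    + split; auto. intros _ [?|?]; [congruence|]. apply (proj1 IH eq_refl); auto.
Qed.

Lemma pos_some x s k : Defs.pos x s = Some k -> (k < length s)%nat /\ nth k s 0%nat = x.
Proof.
  revert k; induction s as [|y s IH]; simpl; intros k H. discriminate.
  destruct (Nat.eqb_spec x y). inversion H; subst. split; auto; lia.
  destruct (Defs.pos x s) as [k'|] eqn:E; [|discriminate]. inversion H; subst.
  destruct (IH k' eq_refl). split; auto; lia.
Qed.

Lemma pos_app_some x s w k : Defs.pos x s = Some k -> Defs.pos x (s ++ w) = Some k.
Proof.
  revert k; induction s as [|y s IH]; simpl; intros k H. discriminate.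
  destruct (Nat.eqb_spec x y); auto.
  destruct (Defs.pos x s) as [k'|] eqn:E; [|discriminate]. rewrite (IH k' eq_refl). auto.
Qed.

Lemma pos_app_new x s w : ~ In x s -> Defs.pos x (s ++ x :: w) = Some (length s).
Proof.
  induction s as [|y s IH]; simpl; intros H. rewrite Nat.eqb_refl; auto.
  destruct (Nat.eqb_spec x y). exfalso; auto. rewrite IH; auto.
Qed.

Lemma labels_from_app l seen : exists w, labels_from seen l = seen ++ w.
Proof.
  revert seen; induction l as [|x l IH]; intros seen; simpl. exists []; rewrite app_nil_r; auto.
  destruct (Defs.pos x seen). apply IH. destruct (IH (seen ++ [x])) as [w E]. rewrite E.
  exists (x :: w). rewrite <- app_assoc; auto.
Qed.

Lemma canon_aux_index l seen :
  canon_aux seen l = map (fun x => label_index x (labels_from seen l)) l.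
Proof.
  revert seen; induction l as [|x l IH]; intros seen; simpl; auto.
  destruct (Defs.pos x seen) eqn:E; rewrite IH; f_equal.
  - destruct (labels_from_app l seen) as [w Ew]. rewrite Ew. unfold label_index.
    rewrite (pos_app_some _ _ _ _ E). auto.
  - destruct (labels_from_app l (seen ++ [x])) as [w Ew]. rewrite Ew. unfold label_index.
    rewrite <- app_assoc. simpl. rewrite pos_app_new; auto. apply pos_none; auto.
Qed.

Lemma in_labels_from l seen x : In x (labels_from seen l) <-> In x seen \/ In x l.
Proof.
  revert seen; induction l as [|y l IH]; intros seen; simpl. tauto.
  destruct (Defs.pos y seen) eqn:E.
  - rewrite IH. split. tauto. intros [?|[<-|?]]; auto. left.
    destruct (In_dec Nat.eq_dec y seen) as [|N]; auto. apply pos_none in N. congruence.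
  - rewrite IH, in_app_iff. simpl. tauto.
Qed.

Lemma NoDup_labels_from l seen : NoDup seen -> NoDup (labels_from seen l).
Proof.
  revert seen; induction l as [|y l IH]; intros seen ND; simpl; auto.
  destruct (Defs.pos y seen) eqn:E; apply IH; auto.
  apply NoDup_app; auto. repeat constructor; auto.
  intros z Hz [<-|[]]. apply pos_none in E; contradiction.
Qed.

Lemma canon_index l : canon l = map (fun x => label_index x (labels l)) l.
Proof. apply canon_aux_index. Qed.

Lemma in_labels l x : In x (labels l) <-> In x l.
Proof. unfold labels. rewrite in_labels_from. simpl; tauto. Qed.

Lemma NoDup_labels l : NoDup (labels l).
Proof. apply NoDup_labels_from. constructor. Qed.

Lemma nblocks_labels l : nblocks l = length (labels l).
Proof.
  unfold nblocks. apply Nat.le_antisymm; apply NoDup_incl_length.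
  - apply NoDup_nodup.
  - intros x Hx. apply in_labels. apply nodup_In in Hx; auto.
  - apply NoDup_labels.
  - intros x Hx. apply nodup_In. apply in_labels; auto.
Qed.

Lemma label_index_spec x u : In x u -> (label_index x u < length u)%nat /\ nth (label_index x u) u 0%nat = x.
Proof.
  intros H. destruct (Defs.pos x u) as [k|] eqn:E.
  - unfold label_index; rewrite E. apply pos_some; auto.
  - apply pos_none in E; contradiction.
Qed.

Lemma label_index_nth u i : NoDup u -> (i < length u)%nat -> label_index (nth i u 0%nat) u = i.
Proof.
  intros ND Hi. destruct (label_index_spec (nth i u 0%nat) u (nth_In _ _ Hi)) as [A B].
  rewrite (NoDup_nth u 0%nat) in ND. apply ND; auto.
Qed.

Lemma length_canon l : length (canon l) = length l.
Proof. rewrite canon_index, length_map; auto. Qed.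

Lemma canon_bound l y : In y (canon l) -> (y < nblocks l)%nat.
Proof.
  rewrite canon_index, nblocks_labels. intros H. apply in_map_iff in H as [x [<- Hx]].
  apply label_index_spec. apply in_labels; auto.
Qed.

Definition injon (s : nat -> nat) (l : list nat) :=
  forall x y, In x l -> In y l -> s x = s y -> x = y.

Lemma pos_map s x l : injon s (x :: l) -> Defs.pos (s x) (map s l) = Defs.pos x l.
Proof.
  induction l as [|y l IH]; intros I; simpl; auto.
  destruct (Nat.eqb_spec (s x) (s y)) as [E|E]; destruct (Nat.eqb_spec x y); auto.
  - exfalso. apply n. apply I; simpl; auto.
  - subst; congruence.
  - rewrite IH; auto. intros a b Ha Hb Eab. apply I; simpl in *; tauto.
Qed.

Lemma relabel l seen s : injon s (seen ++ l) ->
  canon_aux (map s seen) (map s l) = canon_aux seen l /\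
  labels_from (map s seen) (map s l) = map s (labels_from seen l).
Proof.
  revert seen; induction l as [|x l IH]; intros seen I; simpl. auto.
  rewrite pos_map.
  2:{ intros a b Ha Hb E. apply I; repeat rewrite in_app_iff in *; simpl in *; tauto. }
  destruct (Defs.pos x seen) eqn:E.
  - destruct (IH seen) as [A B].
    { intros a b Ha Hb Ee. apply I; repeat rewrite in_app_iff in *; simpl in *; tauto. }
    rewrite A, B; auto.
  - destruct (IH (seen ++ [x])) as [A B].
    { intros a b Ha Hb Ee. apply I; repeat rewrite in_app_iff in *; simpl in *; tauto. }
    rewrite map_app in A, B. simpl in A, B. rewrite length_map, A, B; auto.
Qed.

Lemma canon_relabel s l : injon s l -> canon (map s l) = canon l.
Proof. intros. unfold canon. apply (relabel l [] s); auto. Qed.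

Lemma labels_relabel s l : injon s l -> labels (map s l) = map s (labels l).
Proof. intros. unfold labels. apply (relabel l [] s); auto. Qed.

Lemma label_index_injon l : injon (fun x => label_index x (labels l)) l.
Proof.
  intros x y Hx Hy E. apply in_labels in Hx, Hy.
  destruct (label_index_spec _ _ Hx) as [_ B1]. destruct (label_index_spec _ _ Hy) as [_ B2].
  congruence.
Qed.

Lemma canon_canon l : canon (canon l) = canon l.
Proof. rewrite (canon_index l) at 1. apply canon_relabel, label_index_injon. Qed.

Lemma nblocks_canon l : nblocks (canon l) = nblocks l.
Proof.
  rewrite !nblocks_labels, canon_index at 1.
  rewrite labels_relabel, length_map by apply label_index_injon; auto.
Qed.

Lemma in_parts n c : In c (parts n) <-> length c = n /\ (forall x, In x c -> (x < n)%nat) /\ canon c = c.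
Proof. unfold parts. rewrite filter_In, in_seqs, leqb_eq. tauto. Qed.

Lemma NoDup_parts n : NoDup (parts n).
Proof. apply NoDup_filter, NoDup_seqs. Qed.

Lemma parts_length n p : In p (parts n) -> length p = n.
Proof. intros Hp. apply in_parts in Hp; tauto. Qed.

Lemma canon_in_parts n l : length l = n -> In (canon l) (parts n).
Proof.
  intros L. apply in_parts. rewrite length_canon, canon_canon. repeat split; auto.
  intros x Hx. apply canon_bound in Hx.
  rewrite nblocks_labels in Hx.
  assert (length (labels l) <= length l)%nat
    by (apply NoDup_incl_length; [apply NoDup_labels|intros y; apply in_labels]). lia.
Qed.

Lemma parts_bound n p x : In p (parts n) -> In x p -> (x < nblocks p)%nat.
Proof.
  intros Hp Hx. apply in_parts in Hp as [_ [_ C]]. rewrite <- C in Hx |- *.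
  rewrite nblocks_canon. apply canon_bound; auto.
Qed.

Lemma parts_label n p l : In p (parts n) -> (l < nblocks p)%nat -> In l p.
Proof.
  intros Hp Hl. apply in_parts in Hp as [_ [_ C]]. rewrite nblocks_labels in Hl.
  rewrite <- C, canon_index. apply in_map_iff. exists (nth l (labels p) 0%nat). split.
  - apply label_index_nth; auto. apply NoDup_labels.
  - apply in_labels, nth_In; auto.
Qed.

Lemma canon_singletons n : canon (singletons n) = singletons n.
Proof.
  assert (Hgen : forall m k, canon_aux (seq 0 k) (seq k m) = seq k m).
  { induction m; intros k; simpl; auto.
    rewrite (proj2 (pos_none k (seq 0 k))), length_seq, <- seq_S, IHm; auto.
    intros H; apply in_seq in H; lia. }
  apply (Hgen n 0%nat).
Qed.

Lemma singletons_in_parts n : In (singletons n) (parts n).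
Proof.
  rewrite <- canon_singletons. apply canon_in_parts. apply length_seq.
Qed.

(** One generation: coalescence probabilities *)

(* the partition induced on the sample when block i of p picks parent h_i *)
Definition image_part (h p : list nat) : list nat := canon (select h p).

(* probability that the blocks of p, each choosing a parent uniformly among
   r individuals, induce the partition q *)
Definition coal_prob (r : nat) (p q : list nat) : R :=
  (/ INR r) ^ nblocks p * sumR (seqs r (nblocks p)) (fun h => indb (leqb (image_part h p) q)).

Definition trans (N : nat) (p q : list nat) : R :=
  sumR (seq 1 N) (fun r => probR N r * coal_prob r p q).

Lemma image_part_parts n h p : length p = n -> In (image_part h p) (parts n).
Proof. intros. apply canon_in_parts. unfold select. rewrite length_map; auto. Qed.

Lemma sumR_by_partition n (L : list (list nat)) (c : list nat -> list nat) (phi : list nat -> R) :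
  (forall h, In h L -> In (c h) (parts n)) ->
  sumR L (fun h => phi (c h)) = sumR (parts n) (fun q => phi q * sumR L (fun h => indb (leqb (c h) q))).
Proof.
  intros H. transitivity (sumR (parts n) (fun q => sumR L (fun h => indb (leqb (c h) q) * phi q))).
  - rewrite sumR_swap. apply sumR_ext. intros h Hh.
    rewrite sumR_delta_leqb; auto. apply NoDup_parts.
  - apply sumR_ext; intros q _. rewrite sumR_scal_r, Rmult_comm; reflexivity.
Qed.

Lemma coal_prob_nonneg r p q : (1 <= r)%nat -> 0 <= coal_prob r p q.
Proof.
  intros Hr. unfold coal_prob. apply Rmult_le_pos.
  - apply pow_le. left; apply Rinv_0_lt_compat, lt_0_INR; lia.
  - apply sumR_nonneg. intros; unfold indb; destruct leqb; lra.
Qed.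

Lemma coal_prob_rowsum n r p : (1 <= r)%nat -> length p = n ->
  sumR (parts n) (fun q => coal_prob r p q) = 1.
Proof.
  intros Hr Hp. unfold coal_prob. rewrite sumR_scal, sumR_swap.
  rewrite sumR_ext with (g := fun _ => 1).
  - rewrite sumR_seqs_const, Rmult_1_r, <- Rpow_mult_distr, Rinv_l, pow1; [reflexivity|].
    apply not_0_INR; lia.
  - intros h _. rewrite <- (sumR_delta_leqb (parts n) (image_part h p) (fun _ => 1)).
    + apply sumR_ext; intros; lra.
    + apply NoDup_parts.
    + apply image_part_parts; auto.
Qed.

Lemma coal_prob_le1 n r p q : (1 <= r)%nat -> length p = n -> In q (parts n) -> coal_prob r p q <= 1.
Proof.
  intros Hr Hp Hq. rewrite <- (coal_prob_rowsum n r p Hr Hp).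
  apply sumR_single_le; auto. intros; apply coal_prob_nonneg; auto.
Qed.

Lemma probR_in N r : (1 <= r <= N)%nat -> probR N r = / INR N.
Proof.
  intros Hr. unfold probR.
  replace ((1 <=? r)%nat && (r <=? N)%nat)%bool with true; auto.
  symmetry. apply andb_true_intro; split; apply Nat.leb_le; lia.
Qed.

Lemma probR_sum N : (1 <= N)%nat -> sumR (seq 1 N) (fun r => probR N r) = 1.
Proof.
  intros HN. rewrite sumR_ext with (g := fun _ => / INR N).
  - rewrite sumR_const, length_seq. field. apply not_0_INR; lia.
  - intros r Hr. apply in_seq in Hr. apply probR_in. lia.
Qed.

Lemma trans_rowsum n N p : (1 <= N)%nat -> length p = n -> sumR (parts n) (fun q => trans N p q) = 1.
Proof.
  intros HN Hp. unfold trans. rewrite sumR_swap.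
  rewrite sumR_ext with (g := fun r => probR N r). apply probR_sum; auto.
  intros r Hr. apply in_seq in Hr. rewrite sumR_scal, coal_prob_rowsum with (n := n); auto; [lra|lia].
Qed.

(* the parents of the sample only depend on the parents of its distinct labels *)
Lemma select_labels f a : select f a = select (select f (labels a)) (canon a).
Proof.
  unfold select. rewrite canon_index, map_map. apply map_ext_in. intros x Hx.
  assert (Hu : In x (labels a)) by (apply in_labels; auto).
  destruct (label_index_spec _ _ Hu) as [L E].
  rewrite (nth_map_lt _ _ _ 0%nat) by exact L. rewrite E. auto.
Qed.

(* Markov property of one generation: averaging a function of the induced
   partition over all parent maps of m individuals only involves coal_prob *)
Lemma sum_parent_maps n m r a (phi : list nat -> R) : (1 <= r)%nat -> length a = n ->
  (forall x, In x a -> (x < m)%nat) ->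
  sumR (seqs r m) (fun f => (/ INR r) ^ m * phi (canon (select f a))) =
  sumR (parts n) (fun q => coal_prob r (canon a) q * phi q).
Proof.
  intros Hr La Ha. rewrite sumR_scal.
  assert (K : length (labels a) = nblocks (canon a)) by (rewrite nblocks_canon, nblocks_labels; auto).
  assert (Km : (length (labels a) <= m)%nat).
  { apply NoDup_length_bound. apply NoDup_labels. intros x Hx. apply Ha, in_labels; auto. }
  transitivity ((/ INR r) ^ m *
    sumR (seqs r m) (fun f => (fun h => phi (image_part h (canon a))) (select f (labels a)))).
  { f_equal. apply sumR_ext. intros f _. unfold image_part. rewrite <- select_labels. auto. }
  rewrite (sumR_select m (labels a) (fun h => phi (image_part h (canon a))) r), K
    by (apply NoDup_labels || (intros x Hx; apply Ha, in_labels; auto)).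
  rewrite K in Km.
  rewrite (sumR_by_partition n _ (fun h => image_part h (canon a)))
    by (intros; apply image_part_parts; rewrite length_canon; auto).
  rewrite <- Rmult_assoc, <- sumR_scal. apply sumR_ext. intros q _. unfold coal_prob.
  replace ((/ INR r) ^ m * INR r ^ (m - nblocks (canon a))) with ((/ INR r) ^ nblocks (canon a)).
  - lra.
  - replace m with (nblocks (canon a) + (m - nblocks (canon a)))%nat at 1 by lia.
    rewrite pow_add, Rmult_assoc, <- Rpow_mult_distr, Rinv_l, pow1. lra. apply not_0_INR; lia.
Qed.

(** The sample partitions form a Markov chain *)

Fixpoint chain_exp (n N G : nat) (p : list nat) (Psi : list (list nat) -> R) : R :=
  match G with
  | O => Psi [p]
  | S G' => sumR (parts n) (fun q => trans N p q * chain_exp n N G' q (fun path => Psi (p :: path)))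
  end.

Definition ancestral_path (fs : list (list nat)) (a : list nat) (G : nat) : list (list nat) :=
  map (fun g => canon (map (anc fs g) a)) (seq 0 (S G)).

Lemma wf_exp_ext N G r k1 k2 : (forall fs, k1 fs = k2 fs) -> wf_exp N r G k1 = wf_exp N r G k2.
Proof.
  revert r k1 k2; induction G; intros r k1 k2 H; simpl; auto.
  apply sumR_ext; intros. f_equal. apply sumR_ext; intros. f_equal. apply IHG. intros; apply H.
Qed.

Lemma chain_exp_ext n N G p Psi1 Psi2 :
  (forall pa, Psi1 (p :: pa) = Psi2 (p :: pa)) -> chain_exp n N G p Psi1 = chain_exp n N G p Psi2.
Proof.
  revert p Psi1 Psi2; induction G; intros p P1 P2 H; simpl; auto.
  apply sumR_ext; intros. f_equal. apply IHG. intros; apply H.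
Qed.

Lemma ancestral_path_cons f fs a G :
  ancestral_path (f :: fs) a (S G) = canon a :: ancestral_path fs (select f a) G.
Proof.
  unfold ancestral_path. change (seq 0 (S (S G))) with (0%nat :: seq 1 (S G)).
  rewrite <- (seq_shift (S G) 0). cbn [map]. f_equal.
  - f_equal. simpl. apply map_id.
  - rewrite map_map. apply map_ext. intros g. unfold select. rewrite map_map. reflexivity.
Qed.

Lemma wf_exp_chain n N G rprev a Psi : length a = n -> (forall x, In x a -> (x < rprev)%nat) ->
  wf_exp N rprev G (fun fs => Psi (ancestral_path fs a G)) = chain_exp n N G (canon a) Psi.
Proof.
  revert rprev a Psi; induction G; intros rprev a Psi La Ha.
  - simpl. unfold ancestral_path. simpl. rewrite map_id. reflexivity.
  - cbn [wf_exp chain_exp]. unfold trans.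
    set (Phi := fun q => chain_exp n N G q (fun pa => Psi (canon a :: pa))).
    transitivity (sumR (seq 1 N) (fun r => probR N r * sumR (parts n) (fun q => coal_prob r (canon a) q * Phi q))).
    + apply sumR_ext. intros r Hr. apply in_seq in Hr. f_equal.
      rewrite <- (sum_parent_maps n rprev r a Phi) by (auto; lia). apply sumR_ext. intros f Hf. f_equal.
      apply in_seqs in Hf as [Lf Hf]. unfold Phi. rewrite <- (IHG r (select f a)).
      * apply wf_exp_ext. intros fs. rewrite ancestral_path_cons. auto.
      * unfold select. rewrite length_map; auto.
      * intros x Hx. apply in_map_iff in Hx as [i [<- Hi]]. apply Hf, nth_In. rewrite Lf; auto.
    + transitivity (sumR (parts n) (fun q => sumR (seq 1 N) (fun r => probR N r * (coal_prob r (canon a) q * Phi q)))).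
      * rewrite sumR_swap. apply sumR_ext; intros. symmetry. apply sumR_scal.
      * apply sumR_ext. intros q _. rewrite <- sumR_scal_r. apply sumR_ext; intros; unfold Phi; ring.
Qed.

Fixpoint mpow (n : nat) (A : list nat -> list nat -> R) (j : nat) (p q : list nat) : R :=
  match j with
  | O => indb (leqb p q)
  | S j' => sumR (parts n) (fun s => A p s * mpow n A j' s q)
  end.

Lemma kQpow_mpow n j p q : kQpow n j p q = mpow n kQ j p q.
Proof.
  revert p q; induction j; intros; simpl; auto. apply sumR_ext; intros. rewrite IHj; auto.
Qed.

Lemma chain_exp_scal n N G p c Psi : chain_exp n N G p (fun pa => c * Psi pa) = c * chain_exp n N G p Psi.
Proof.
  revert p Psi; induction G; intros; simpl; auto. rewrite <- sumR_scal. apply sumR_ext; intros.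
  rewrite IHG. lra.
Qed.

Lemma chain_exp_one n N G p : (1 <= N)%nat -> length p = n -> chain_exp n N G p (fun _ => 1) = 1.
Proof.
  intros HN. revert p; induction G; intros p Hp; simpl; auto.
  rewrite sumR_ext with (g := fun q => trans N p q). apply trans_rowsum; auto.
  intros q Hq. rewrite IHG. lra. apply parts_length in Hq; auto.
Qed.

(* Chapman–Kolmogorov: conditioning on the state at step g *)
Lemma chain_exp_split n N g H p (psi : list nat -> R) Psi2 : (g <= H)%nat -> In p (parts n) ->
  chain_exp n N H p (fun pa => psi (nth g pa []) * Psi2 (skipn g pa)) =
  sumR (parts n) (fun q => mpow n (trans N) g p q * psi q * chain_exp n N (H - g) q Psi2).
Proof.
  revert H p; induction g; intros H p Hg Hp.
  - rewrite (chain_exp_ext n N H p _ (fun pa => psi p * Psi2 pa)) by reflexivity.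
    rewrite chain_exp_scal, Nat.sub_0_r.
    rewrite sumR_ext with (g := fun q => indb (leqb p q) * (psi q * chain_exp n N H q Psi2))
      by (intros; simpl; lra).
    rewrite sumR_delta_leqb; auto. apply NoDup_parts.
  - destruct H as [|H]; [lia|]. cbn [chain_exp mpow]. simpl (S H - S g)%nat.
    rewrite sumR_ext with (g := fun s => trans N p s *
       sumR (parts n) (fun q => mpow n (trans N) g s q * psi q * chain_exp n N (H - g) q Psi2)).
    2:{ intros s Hs. f_equal. apply (IHg H s); auto; lia. }
    rewrite sumR_ext with (g := fun s => sumR (parts n)
        (fun q => trans N p s * mpow n (trans N) g s q * (psi q * chain_exp n N (H - g) q Psi2))).
    2:{ intros. rewrite <- sumR_scal. apply sumR_ext; intros; lra. }
    rewrite sumR_swap. apply sumR_ext. intros q _. rewrite sumR_scal_r. lra.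
Qed.

Fixpoint obs_indicator (gen : R -> nat) (g0 : nat) (obs : list (R * list nat)) : list (list nat) -> R :=
  match obs with
  | [] => fun _ => 1
  | (t, pi) :: obs' => fun pa => indb (leqb (nth (gen t - g0) pa []) pi) *
                                obs_indicator gen (gen t) obs' (skipn (gen t - g0) pa)
  end.

Fixpoint gen_sorted (gen : R -> nat) (g0 : nat) (obs : list (R * list nat)) : Prop :=
  match obs with
  | [] => True
  | (t, _) :: obs' => (g0 <= gen t)%nat /\ gen_sorted gen (gen t) obs'
  end.

Fixpoint chain_fdd (n N : nat) (gen : R -> nat) (g0 : nat) (p : list nat) (obs : list (R * list nat)) : R :=
  match obs with
  | [] => 1
  | (t, pi) :: obs' => mpow n (trans N) (gen t - g0) p pi * chain_fdd n N gen (gen t) pi obs'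
  end.

Lemma gen_sorted_ge gen obs g0 : gen_sorted gen g0 obs -> forall o, In o obs -> (g0 <= gen (fst o))%nat.
Proof.
  revert g0; induction obs as [|[t pi] obs IH]; intros g0 S o Ho; simpl in *. contradiction.
  destruct S as [S1 S2]. destruct Ho as [<-|Ho]; simpl; auto.
  specialize (IH _ S2 o Ho). lia.
Qed.

Lemma obs_indicator_forallb gen obs g0 pa : gen_sorted gen g0 obs ->
  obs_indicator gen g0 obs pa = indb (forallb (fun o => leqb (nth (gen (fst o) - g0) pa []) (snd o)) obs).
Proof.
  revert g0 pa; induction obs as [|[t pi] obs IH]; intros g0 pa S; simpl. unfold indb; simpl; lra.
  destruct S as [S1 S2]. rewrite indb_andb, IH; auto. do 2 f_equal.
  apply forallb_ext_in. intros o Ho. rewrite nth_skipn. do 2 f_equal.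
  pose proof (gen_sorted_ge gen obs (gen t) S2 o Ho). lia.
Qed.

Lemma chain_exp_obs n N gen obs g0 H p : (1 <= N)%nat -> gen_sorted gen g0 obs ->
  (forall o, In o obs -> (gen (fst o) - g0 <= H)%nat) -> In p (parts n) ->
  Forall (fun o => In (snd o) (parts n)) obs ->
  chain_exp n N H p (obs_indicator gen g0 obs) = chain_fdd n N gen g0 p obs.
Proof.
  intros HN. revert g0 H p; induction obs as [|[t pi] obs IH]; intros g0 H p S HH Hp Fa.
  - apply chain_exp_one; auto. apply parts_length in Hp; auto.
  - cbn [obs_indicator chain_fdd]. inversion Fa as [|? ? Hpi Fa']; subst. simpl in Hpi.
    destruct S as [S1 S2].
    assert (Ht : (gen t - g0 <= H)%nat) by (apply (HH (t, pi)); left; auto).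
    rewrite (chain_exp_split n N (gen t - g0) H p (fun q => indb (leqb q pi))) by auto.
    rewrite sumR_ext with (g := fun q => indb (leqb q pi) * (mpow n (trans N) (gen t - g0) p q *
           chain_exp n N (H - (gen t - g0)) q (obs_indicator gen (gen t) obs))) by (intros; lra).
    rewrite sumR_delta_leqb' by (auto; apply NoDup_parts).
    f_equal. apply IH; auto.
    intros o Ho. pose proof (HH o (or_intror Ho)).
    pose proof (gen_sorted_ge gen obs (gen t) S2 o Ho). lia.
Qed.

Lemma nth_ancestral_path fs a G g :
  (g <= G)%nat -> nth g (ancestral_path fs a G) [] = canon (map (anc fs g) a).
Proof.
  intros Hg. unfold ancestral_path.
  rewrite (nth_map_lt _ _ _ 0%nat) by (rewrite length_seq; lia).
  rewrite seq_nth by lia. auto.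
Qed.

Lemma horizon_ge N obs o : In o obs -> (gen_of N (fst o) <= horizon N obs)%nat.
Proof.
  induction obs; simpl; intros H. contradiction. destruct H as [<-|H]. lia. specialize (IHobs H). lia.
Qed.

Lemma wf_fdd_chain N n r0 obs : (1 <= N)%nat -> (n <= r0)%nat ->
  gen_sorted (gen_of N) 0 obs -> Forall (fun o => In (snd o) (parts n)) obs ->
  wf_fdd N n r0 obs = chain_fdd n N (gen_of N) 0 (singletons n) obs.
Proof.
  intros HN Hr S Fa. unfold wf_fdd.
  rewrite (wf_exp_ext N _ r0 _
    (fun fs => obs_indicator (gen_of N) 0 obs (ancestral_path fs (seq 0 n) (horizon N obs)))).
  2:{ intros fs. rewrite obs_indicator_forallb; auto. unfold indb.
      erewrite forallb_ext_in; [reflexivity|].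
      intros o Ho. cbv beta. rewrite Nat.sub_0_r, nth_ancestral_path by (apply horizon_ge; auto).
      reflexivity. }
  rewrite (wf_exp_chain n N). 2: apply length_seq. 2:{ intros x Hx; apply in_seq in Hx; lia. }
  fold (singletons n). rewrite canon_singletons.
  apply chain_exp_obs; auto. 2: apply singletons_in_parts.
  intros o Ho. rewrite Nat.sub_0_r. apply horizon_ge; auto.
Qed.

Lemma image_part_injective n p h : In p (parts n) -> length h = nblocks p -> NoDup h -> image_part h p = p.
Proof.
  intros Hp Lh ND. unfold image_part, select. rewrite canon_relabel.
  - apply in_parts in Hp; tauto.
  - intros x y Hx Hy E. rewrite (NoDup_nth h 0%nat) in ND. apply ND; auto;
      rewrite Lh; eapply parts_bound; eauto.
Qed.

Lemma image_part_collision n p h a b : In p (parts n) -> length h = nblocks p ->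
  (a < b)%nat -> (b < nblocks p)%nat -> single_collision h a b = true -> image_part h p = merge p a b.
Proof.
  intros Hp Lh Hab Hb K. apply single_collision_spec in K as [E ND]. unfold image_part, merge, select.
  set (g := fun x => if Nat.eqb x b then a else x).
  assert (M : map (fun i => nth i h 0%nat) p = map (fun i => nth i h 0%nat) (map g p)).
  { rewrite map_map. apply map_ext. intros x. unfold g. destruct (Nat.eqb_spec x b); subst; auto. }
  rewrite M. apply canon_relabel.
  intros x y Hx Hy Exy. apply in_map_iff in Hx as [x' [<- Hx']]. apply in_map_iff in Hy as [y' [<- Hy']].
  pose proof (parts_bound n p x' Hp Hx'). pose proof (parts_bound n p y' Hp Hy').
  apply (del_inj b h 0%nat); auto; try lia; unfold g;
  try (destruct (Nat.eqb_spec x' b); lia); try (destruct (Nat.eqb_spec y' b); lia).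
Qed.

Lemma canon_eq_pos l i j : (i < length l)%nat -> (j < length l)%nat ->
  nth i l 0%nat = nth j l 0%nat -> nth i (canon l) 0%nat = nth j (canon l) 0%nat.
Proof.
  intros Hi Hj E. rewrite canon_index, !(nth_map_lt _ _ _ 0%nat) by auto. rewrite E; auto.
Qed.

Lemma merge_ne n p a b : In p (parts n) -> (a < b)%nat -> (b < nblocks p)%nat -> merge p a b <> p.
Proof.
  intros Hp Hab Hb E.
  destruct (In_nth p a 0%nat (parts_label n p a Hp ltac:(lia))) as [i [Hi Ei]].
  destruct (In_nth p b 0%nat (parts_label n p b Hp Hb)) as [j [Hj Ej]].
  assert (nth i (merge p a b) 0%nat = nth j (merge p a b) 0%nat).
  { unfold merge. apply canon_eq_pos; rewrite ?length_map; auto.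
    rewrite !(nth_map_lt _ _ _ 0%nat) by auto. rewrite Ei, Ej, Nat.eqb_refl.
    destruct (Nat.eqb_spec a b); lia. }
  rewrite E in H. lia.
Qed.

Lemma merge_parts n p a b : length p = n -> In (merge p a b) (parts n).
Proof. intros. unfold merge. apply canon_in_parts. rewrite length_map; auto. Qed.

Definition pairs (k : nat) : list (nat * nat) :=
  flat_map (fun b => map (fun a => (a, b)) (seq 0 b)) (seq 0 k).

Lemma sumR_pairs k (F : nat -> nat -> R) :
  sumR (seq 0 k) (fun b => sumR (seq 0 b) (fun a => F a b)) = sumR (pairs k) (fun ab => F (fst ab) (snd ab)).
Proof. unfold pairs. rewrite sumR_flat_map. apply sumR_ext; intros. rewrite sumR_map. auto. Qed.

Lemma in_pairs k a b : In (a, b) (pairs k) <-> (a < b)%nat /\ (b < k)%nat.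
Proof.
  unfold pairs. rewrite in_flat_map. split.
  - intros [b' [Hb Hm]]. apply in_map_iff in Hm as [a' [E Ha]]. inversion E; subst.
    apply in_seq in Hb, Ha. lia.
  - intros [Ha Hb]. exists b. split. apply in_seq; lia. apply in_map_iff. exists a. split; auto. apply in_seq; lia.
Qed.

Lemma NoDup_pairs k : NoDup (pairs k).
Proof.
  unfold pairs. assert (forall l, NoDup l -> NoDup (flat_map (fun b => map (fun a => (a, b)) (seq 0 b)) l)).
  { induction l; intros ND; simpl. constructor. inversion ND; subst. apply NoDup_app; auto.
    - apply NoDup_map_NoDup_ForallPairs. intros x y _ _ E; inversion E; auto. apply seq_NoDup.
    - intros [x y] G1 G2. apply in_map_iff in G1 as [? [E1 _]]. inversion E1; subst.
      apply in_flat_map in G2 as [z [Hz G2]]. apply in_map_iff in G2 as [? [E2 _]].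
      inversion E2; subst. contradiction. }
  apply H, seq_NoDup.
Qed.

Lemma pairs_count k : sumR (pairs k) (fun _ => 1) = INR (k * (k - 1) / 2).
Proof.
  rewrite <- (sumR_pairs k (fun _ _ => 1)).
  induction k. simpl. unfold sumR; simpl; auto.
  rewrite seq_S, sumR_app, IHk. simpl (0 + k)%nat. rewrite sumR_cons, sumR_nil, sumR_const, length_seq.
  replace (S k * (S k - 1))%nat with (k * (k - 1) + k * 2)%nat by (destruct k; simpl; lia).
  rewrite Nat.div_add, plus_INR by lia. lra.
Qed.

Lemma sumR_seq_INR k : sumR (seq 0 k) (fun i => INR i) = INR (k * (k - 1) / 2).
Proof.
  rewrite <- pairs_count, <- (sumR_pairs k (fun _ _ => 1)).
  apply sumR_ext. intros b _. rewrite sumR_const, length_seq. lra.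
Qed.

Definition merge_rate (p q : list nat) : R :=
  sumR (pairs (nblocks p)) (fun ab => indb (leqb (merge p (fst ab) (snd ab)) q)).

Lemma kQ_eq p q : kQ p q = if leqb p q then - INR (nblocks p * (nblocks p - 1) / 2) else merge_rate p q.
Proof. unfold kQ, merge_rate. destruct (leqb p q); auto. apply sumR_pairs. Qed.

Lemma falling_ratio_le1 r k : (1 <= r)%nat -> 0 <= INR (ffn r k) * (/ INR r) ^ k <= 1.
Proof.
  intros Hr. assert (0 < INR r) by (apply lt_0_INR; lia).
  induction k; simpl. lra.
  rewrite mult_INR. destruct IHk as [I1 I2].
  assert (0 <= INR (r - k) <= INR r) by (split; [apply pos_INR | apply le_INR; lia]).
  replace (INR (ffn r k) * INR (r - k) * (/ INR r * (/ INR r) ^ k)) with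
    ((INR (ffn r k) * (/ INR r) ^ k) * (INR (r - k) / INR r)) by (unfold Rdiv; ring).
  assert (0 <= INR (r - k) / INR r <= 1) by (split; [apply Rdiv_le_0_compat | apply Rdiv_le_1]; lra).
  split. apply Rmult_le_pos; lra. rewrite <- (Rmult_1_r 1). apply Rmult_le_compat; lra.
Qed.

(* the probability that k individuals pick distinct parents among r *)
Lemma falling_ratio_lower r k : (1 <= r)%nat -> (k <= r)%nat ->
  1 - INR (k * (k - 1) / 2) / INR r <= INR (ffn r k) * (/ INR r) ^ k.
Proof.
  intros Hr. rewrite <- sumR_seq_INR. assert (0 < INR r) by (apply lt_0_INR; lia).
  induction k; intros Hk. { simpl. unfold sumR; simpl; unfold Rdiv; lra. }
  cbn [ffn pow]. rewrite seq_S, sumR_app, sumR_cons, sumR_nil. simpl (0 + k)%nat.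
  rewrite mult_INR, minus_INR by lia. specialize (IHk ltac:(lia)).
  replace (INR (ffn r k) * (INR r - INR k) * (/ INR r * (/ INR r) ^ k)) with
    ((INR (ffn r k) * (/ INR r) ^ k) * (1 - INR k / INR r)) by (field; lra).
  assert (INR k / INR r <= 1) by (apply Rdiv_le_1; [lra| apply le_INR; lia]).
  assert (0 <= INR k / INR r) by (apply Rdiv_le_0_compat; [apply pos_INR|lra]).
  set (S := sumR (seq 0 k) (fun i => INR i)) in *.
  assert (0 <= S / INR r) by (apply Rdiv_le_0_compat; [apply sumR_nonneg; intros; apply pos_INR|lra]).
  apply Rle_trans with ((1 - S / INR r) * (1 - INR k / INR r)).
  - replace ((S + (INR k + 0)) / INR r) with (S / INR r + INR k / INR r) by (field; lra). nra.
  - apply Rmult_le_compat_r; lra.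
Qed.

(** The one-step estimate coal_prob r p q = [p = q] + kQ p q / r + O(1/r^2) *)

Section OneStep.
Variable n : nat.
Variable p : list nat.
Hypothesis Hp : In p (parts n).

Let k := nblocks p.
Let Cc := INR (k * (k - 1) / 2).

Lemma merge_rate_diag : merge_rate p p = 0.
Proof.
  unfold merge_rate. rewrite sumR_ext with (g := fun _ => 0) by
    (intros [a b] Hab; apply in_pairs in Hab; simpl; unfold indb;
     destruct (leqb (merge p a b) p) eqn:E; auto; apply leqb_eq in E;
     exfalso; destruct Hab; eapply (merge_ne n p a b); eauto).
  apply sumR_zero.
Qed.

Lemma merge_rate_sum : sumR (parts n) (merge_rate p) = Cc.
Proof.
  unfold merge_rate, Cc, k. rewrite sumR_swap, <- pairs_count. apply sumR_ext. intros [a b] _.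
  simpl. rewrite sumR_ext with (g := fun q => indb (leqb (merge p a b) q) * 1) by (intros; ring).
  apply sumR_delta_leqb. apply NoDup_parts. apply merge_parts, parts_length; auto.
Qed.

Lemma merge_rate_bounds q : 0 <= merge_rate p q <= Cc.
Proof.
  unfold merge_rate, Cc, k. rewrite <- pairs_count. split.
  - apply sumR_nonneg. intros. unfold indb; destruct leqb; lra.
  - apply sumR_le. intros. unfold indb; destruct leqb; lra.
Qed.

(* no collision: p is kept *)
Lemma coal_prob_diag_lower r : (1 <= r)%nat -> INR (ffn r k) * (/ INR r) ^ k <= coal_prob r p p.
Proof.
  intros Hr. unfold coal_prob. fold k. rewrite <- count_injective, Rmult_comm.
  apply Rmult_le_compat_l. apply pow_le. left; apply Rinv_0_lt_compat, lt_0_INR; lia.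
  apply sumR_le. intros h Hh. apply in_seqs in Hh as [Lh _].
  destruct (NoDup_dec Nat.eq_dec h).
  - rewrite image_part_injective with (n := n), leqb_refl; auto. unfold indb; lra.
  - unfold indb; destruct leqb; lra.
Qed.

(* exactly one collision: each merger producing q contributes *)
Lemma coal_prob_merge_lower r q : (1 <= r)%nat -> (1 <= k)%nat ->
  merge_rate p q * (INR (ffn r (k - 1)) * (/ INR r) ^ k) <= coal_prob r p q.
Proof.
  intros Hr Hk. unfold coal_prob. fold k.
  replace (merge_rate p q * (INR (ffn r (k - 1)) * (/ INR r) ^ k)) with
    ((/ INR r) ^ k * sumR (pairs k) (fun ab => indb (leqb (merge p (fst ab) (snd ab)) q) * INR (ffn r (k - 1)))).
  2:{ rewrite sumR_scal_r. unfold merge_rate. fold k. ring. }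
  apply Rmult_le_compat_l. apply pow_le. left; apply Rinv_0_lt_compat, lt_0_INR; lia.
  rewrite sumR_ext with (g := fun ab => sumR (seqs r k) (fun h =>
      indb (leqb (merge p (fst ab) (snd ab)) q) * indb (single_collision h (fst ab) (snd ab)))).
  2:{ intros [a b] Hab. apply in_pairs in Hab. simpl. rewrite sumR_scal.
      rewrite <- (count_single_collision r (k - 1) a b) by lia. replace (S (k - 1)) with k by lia. auto. }
  rewrite sumR_swap. apply sumR_le. intros h Hh. apply in_seqs in Hh as [Lh _].
  rewrite sumR_ext with (g := fun ab => indb (leqb (image_part h p) q) * indb (single_collision h (fst ab) (snd ab))).
  2:{ intros [a b] Hab. apply in_pairs in Hab. simpl. unfold indb at 2 4.
      destruct (single_collision h a b) eqn:K; [|ring].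
      rewrite image_part_collision with (n := n) (a := a) (b := b); auto; tauto. }
  rewrite sumR_scal, <- Rmult_1_r. apply Rmult_le_compat_l.
  - unfold indb; destruct leqb; lra.
  - apply sumR_indicator_le1. apply NoDup_pairs.
    intros [a b] [a' b'] H1 H2 K1 K2. apply in_pairs in H1, H2. simpl in *.
    destruct (single_collision_unique h a b a' b'); try lia; auto; subst; auto.
Qed.

Section LargePopulation.
Variable r : nat.
Hypothesis Hk : (1 <= k)%nat.
Hypothesis Hkr : (k <= r)%nat.

Let Hr : (1 <= r)%nat.
Proof. lia. Qed.
Let Rp : 0 < INR r.
Proof. apply lt_0_INR; lia. Qed.

(* weight of one particular single-collision pattern *)
Let A := INR (ffn r (k - 1)) * (/ INR r) ^ k.
(* total probability lost to multiple collisions *)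
Let D := 1 - coal_prob r p p - Cc * A.

Lemma collision_weight_gap : 0 <= / INR r - A <= Cc / INR r ^ 2.
Proof.
  pose proof (falling_ratio_le1 r (k - 1) Hr) as [_ U].
  pose proof (falling_ratio_lower r (k - 1) Hr ltac:(lia)) as L.
  assert (HA : / INR r - A = (1 - INR (ffn r (k - 1)) * (/ INR r) ^ (k - 1)) / INR r).
  { unfold A. replace k with (S (k - 1)) at 2 by lia. simpl pow. field. lra. }
  assert (Cm : INR ((k - 1) * (k - 1 - 1) / 2) <= Cc).
  { unfold Cc. apply le_INR, Nat.Div0.div_le_mono, Nat.mul_le_mono; lia. }
  rewrite HA. split.
  - apply Rdiv_le_0_compat; lra.
  - replace (Cc / INR r ^ 2) with ((Cc / INR r) / INR r) by (field; lra).
    unfold Rdiv. apply Rmult_le_compat_r. left; apply Rinv_0_lt_compat; lra.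
    unfold Rdiv in L. apply Rmult_le_compat_r with (r := / INR r) in Cm;
      [lra | left; apply Rinv_0_lt_compat; lra].
Qed.

Lemma off_diagonal_excess :
  sumR (parts n) (fun q => indb (negb (leqb p q)) * (coal_prob r p q - merge_rate p q * A)) = D.
Proof.
  transitivity (sumR (parts n) (fun q => coal_prob r p q - merge_rate p q * A) -
                (coal_prob r p p - merge_rate p p * A)).
  - rewrite <- (sumR_delta_leqb (parts n) p (fun q => coal_prob r p q - merge_rate p q * A))
      by (auto; apply NoDup_parts).
    rewrite <- sumR_minus. apply sumR_ext; intros. unfold indb. destruct (leqb p x); simpl; ring.
  - rewrite sumR_minus, coal_prob_rowsum with (n := n), sumR_scal_r, merge_rate_sum, merge_rate_diag
      by (auto using parts_length). unfold D. ring.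
Qed.

Lemma excess_nonneg q : 0 <= indb (negb (leqb p q)) * (coal_prob r p q - merge_rate p q * A).
Proof.
  pose proof (coal_prob_merge_lower r q Hr Hk). fold A in H.
  unfold indb; destruct (negb (leqb p q)); lra.
Qed.

Lemma defect_bounds : 0 <= D <= Cc ^ 2 / INR r ^ 2.
Proof.
  split.
  - rewrite <- off_diagonal_excess. apply sumR_nonneg. intros; apply excess_nonneg.
  - pose proof (coal_prob_diag_lower r Hr). pose proof (falling_ratio_lower r k Hr Hkr).
    fold Cc in H0. pose proof collision_weight_gap as [_ G].
    assert (C0 : 0 <= Cc) by apply pos_INR.
    replace (Cc ^ 2 / INR r ^ 2) with (Cc * (Cc / INR r ^ 2)) by (field; lra).
    unfold D. apply Rmult_le_compat_l with (r := Cc) in G; auto. unfold Rdiv in *. nra.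
Qed.

Lemma coal_prob_estimate_large q : In q (parts n) ->
  Rabs (coal_prob r p q - indb (leqb p q) - kQ p q / INR r) <= Cc ^ 2 / INR r ^ 2.
Proof.
  intros Hq. rewrite kQ_eq. fold k Cc.
  pose proof defect_bounds as [D0 D1]. pose proof collision_weight_gap as [G0 G1].
  assert (C0 : 0 <= Cc) by apply pos_INR.
  assert (CG : 0 <= Cc * (/ INR r - A) <= Cc ^ 2 / INR r ^ 2).
  { split. apply Rmult_le_pos; lra.
    replace (Cc ^ 2 / INR r ^ 2) with (Cc * (Cc / INR r ^ 2)) by (field; lra).
    apply Rmult_le_compat_l; lra. }
  destruct (leqb p q) eqn:Epq; unfold indb.
  - apply leqb_eq in Epq. subst q.
    replace (coal_prob r p p - 1 - - Cc / INR r) with (Cc * (/ INR r - A) - D) by (unfold D; field; lra).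
    apply Rabs_le. lra.
  - pose proof (merge_rate_bounds q) as [M0 M1].
    assert (Ex : coal_prob r p q - merge_rate p q * A <= D).
    { rewrite <- off_diagonal_excess.
      eapply Rle_trans; [|apply (sumR_single_le _ _ q Hq)]; [|intros; apply excess_nonneg].
      cbv beta. rewrite Epq. simpl. lra. }
    pose proof (coal_prob_merge_lower r q Hr Hk). fold A in H.
    assert (MG : 0 <= merge_rate p q * (/ INR r - A) <= Cc * (/ INR r - A))
      by (split; [apply Rmult_le_pos | apply Rmult_le_compat_r]; lra).
    replace (coal_prob r p q - 0 - merge_rate p q / INR r) with
      ((coal_prob r p q - merge_rate p q * A) - merge_rate p q * (/ INR r - A)) by (field; lra).
    apply Rabs_le. lra.
Qed.

End LargePopulation.

(* fewer parents than blocks: a crude bound suffices *)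
Lemma coal_prob_estimate_small r q : (1 <= r)%nat -> (r < k)%nat -> In q (parts n) ->
  Rabs (coal_prob r p q - indb (leqb p q) - kQ p q / INR r) <= (2 + Cc) * INR k ^ 2 / INR r ^ 2.
Proof.
  intros Hr Hkr Hq. rewrite kQ_eq. fold k Cc.
  assert (Rp : 0 < INR r) by (apply lt_0_INR; lia).
  assert (C0 : 0 <= Cc) by apply pos_INR.
  assert (Hk2 : 1 <= INR k ^ 2 / INR r ^ 2).
  { apply Rmult_le_reg_r with (INR r ^ 2); [nra|]. unfold Rdiv. rewrite Rmult_assoc, Rinv_l by nra.
    assert (INR r < INR k) by (apply lt_INR; lia). nra. }
  assert (Hinv : 0 < / INR r <= 1).
  { split. apply Rinv_0_lt_compat; lra. rewrite <- Rinv_1. apply Rinv_le_contravar; [lra|]. apply (le_INR 1); lia. }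
  pose proof (coal_prob_nonneg r p q Hr). pose proof (coal_prob_le1 n r p q Hr (parts_length n p Hp) Hq).
  pose proof (merge_rate_bounds q).
  apply Rle_trans with (2 + Cc).
  - unfold Rdiv. destruct (leqb p q); unfold indb; apply Rabs_le; split; nra.
  - unfold Rdiv in *. rewrite Rmult_assoc. nra.
Qed.

Lemma coal_prob_no_blocks r q : k = 0%nat -> coal_prob r p q - indb (leqb p q) - kQ p q / INR r = 0.
Proof.
  intros K0. rewrite kQ_eq. unfold coal_prob, merge_rate. fold k. rewrite K0. simpl seqs.
  rewrite sumR_cons, sumR_nil, image_part_injective with (n := n) by (auto; constructor).
  change (pairs 0) with (@nil (nat * nat)). rewrite sumR_nil.
  destruct (leqb p q); unfold indb, Rdiv; simpl; ring.
Qed.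

Lemma coal_prob_estimate : exists K0, forall q r, In q (parts n) -> (1 <= r)%nat ->
  Rabs (coal_prob r p q - indb (leqb p q) - kQ p q / INR r) <= K0 / INR r ^ 2.
Proof.
  assert (C0 : 0 <= Cc) by apply pos_INR.
  exists (Cc ^ 2 + (2 + Cc) * INR k ^ 2). intros q r Hq Hr.
  assert (Rp : 0 < INR r) by (apply lt_0_INR; lia).
  assert (Sq : 0 <= (2 + Cc) * INR k ^ 2 / INR r ^ 2)
    by (apply Rdiv_le_0_compat; [apply Rmult_le_pos; [lra|apply pow2_ge_0]|nra]).
  assert (Cq : 0 <= Cc ^ 2 / INR r ^ 2) by (apply Rdiv_le_0_compat; nra).
  replace ((Cc ^ 2 + (2 + Cc) * INR k ^ 2) / INR r ^ 2) with
    (Cc ^ 2 / INR r ^ 2 + (2 + Cc) * INR k ^ 2 / INR r ^ 2) by (field; lra).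
  destruct (Nat.eq_dec k 0) as [K0|K0].
  - rewrite coal_prob_no_blocks, Rabs_R0 by auto. lra.
  - destruct (le_lt_dec k r) as [Hkr|Hkr].
    + pose proof (coal_prob_estimate_large r ltac:(lia) Hkr q Hq). lra.
    + pose proof (coal_prob_estimate_small r q Hr Hkr Hq). lra.
Qed.

End OneStep.

(** Harmonic numbers and the coalescence probability C_N *)

Lemma ln_le_x x : 0 < x -> ln x <= x - 1.
Proof.
  intros. pose proof (exp_ineq1_le (x - 1)). replace (1 + (x - 1)) with x in H0 by ring.
  rewrite <- (ln_exp (x - 1)). destruct (Req_dec x (exp (x - 1))) as [E|E].
  - rewrite <- E; lra.
  - left. apply ln_increasing; lra.
Qed.

Lemma ln_pos N : (2 <= N)%nat -> 0 < ln (INR N).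
Proof. intros. rewrite <- ln_1. apply ln_increasing. lra. apply (lt_INR 1); lia. Qed.

Lemma ln_large M : exists N0, forall N, (N0 <= N)%nat -> M < ln (INR N).
Proof.
  destruct (INR_archimed 1 (exp M)) as [N0 HN0]; [lra|]. exists N0. intros N HN.
  pose proof (exp_pos M). pose proof (le_INR _ _ HN).
  rewrite <- (ln_exp M). apply ln_increasing; lra.
Qed.

Lemma Un_cv_squeeze0 (u v : nat -> R) N0 :
  (forall N, (N0 <= N)%nat -> Rabs (u N) <= v N) -> Un_cv v 0 -> Un_cv u 0.
Proof.
  intros B H eps He. destruct (H eps He) as [N1 HN1]. exists (Nat.max N0 N1). intros N HN.
  specialize (HN1 N ltac:(lia)). specialize (B N ltac:(lia)). unfold Rdist in *.
  rewrite Rminus_0_r in *. apply Rabs_def2 in HN1. lra.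
Qed.

Lemma log_over_id_cv0 : Un_cv (fun N => (1 + ln (INR N)) / INR N) 0.
Proof.
  intros eps Heps.
  destruct (INR_archimed 1 (4 / (eps * eps))) as [N0 HN0]; [lra|]. exists (S N0). intros N HN.
  assert (P1 : 1 <= INR N) by (apply (le_INR 1); lia).
  assert (HN' : INR N0 < INR N) by (apply lt_INR; lia).
  set (s := sqrt (INR N)).
  assert (Hs : s * s = INR N) by (apply sqrt_sqrt; lra).
  assert (Hs1 : 1 <= s) by (unfold s; rewrite <- sqrt_1; apply sqrt_le_1_alt; lra).
  assert (Hln : 1 + ln (INR N) <= 2 * s).
  { rewrite <- Hs, ln_mult by lra. pose proof (ln_le_x s ltac:(lra)). lra. }
  assert (Hln0 : 0 <= ln (INR N)) by (rewrite <- ln_1; destruct (Req_dec 1 (INR N)) as [E|E];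
    [rewrite <- E; lra | left; apply ln_increasing; lra]).
  unfold Rdist. rewrite Rminus_0_r, Rabs_right by (apply Rle_ge, Rdiv_le_0_compat; lra).
  assert (Bs : 2 / eps < s).
  { apply Rnot_le_lt. intros C. assert (0 < 2 / eps) by (apply Rdiv_lt_0_compat; lra).
    assert (s * s <= (2 / eps) * (2 / eps)) by (apply Rmult_le_compat; lra).
    replace (2 / eps * (2 / eps)) with (4 / (eps * eps)) in H0 by (field; lra). lra. }
  apply Rle_lt_trans with (2 / s).
  - apply Rle_trans with (2 * s / INR N).
    + unfold Rdiv. apply Rmult_le_compat_r; [left; apply Rinv_0_lt_compat|]; lra.
    + right. rewrite <- Hs. field. lra.
  - apply Rmult_lt_reg_r with s; [lra|]. unfold Rdiv. rewrite Rmult_assoc, Rinv_l by lra.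
    apply Rmult_lt_compat_l with (r := eps) in Bs; auto. unfold Rdiv in Bs.
    replace (eps * (2 * / eps)) with 2 in Bs by (field; lra). lra.
Qed.

Definition harmonic (N : nat) : R := sumR (seq 1 N) (fun i => / INR i).

Lemma harmonic_S N : harmonic (S N) = harmonic N + / INR (S N).
Proof. unfold harmonic. rewrite seq_S, sumR_app, sumR_cons, sumR_nil. simpl (1 + N)%nat. ring. Qed.

Lemma CN_harmonic N : (1 <= N)%nat -> CN N = harmonic N / INR N.
Proof.
  intros HN. unfold CN, harmonic, Rdiv. rewrite <- sumR_scal_r. apply sumR_ext.
  intros i Hi. apply in_seq in Hi. rewrite probR_in by lia. reflexivity.
Qed.

Lemma harmonic_lower N : ln (INR N + 1) <= harmonic N.
Proof.
  induction N. simpl. unfold harmonic; simpl. rewrite Rplus_0_l, ln_1. unfold sumR; simpl; lra.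
  rewrite harmonic_S, S_INR.
  assert (P : 0 < INR N + 1) by (pose proof (pos_INR N); lra).
  replace (INR N + 1 + 1) with ((INR N + 1) * ((INR N + 1 + 1) / (INR N + 1))) by (field; lra).
  rewrite ln_mult by (try apply Rdiv_lt_0_compat; lra).
  pose proof (ln_le_x ((INR N + 1 + 1) / (INR N + 1)) ltac:(apply Rdiv_lt_0_compat; lra)).
  replace ((INR N + 1 + 1) / (INR N + 1) - 1) with (/ (INR N + 1)) in H by (field; lra). lra.
Qed.

Lemma harmonic_upper N : (1 <= N)%nat -> harmonic N <= 1 + ln (INR N).
Proof.
  intros HN. induction N. lia.
  destruct N. unfold harmonic; simpl. rewrite ln_1. unfold sumR; simpl. lra.
  rewrite harmonic_S. specialize (IHN ltac:(lia)).
  assert (P : 0 < INR (S N)) by (apply lt_0_INR; lia).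
  assert (E : ln (INR (S N)) = ln (INR (S N) + 1) + ln (INR (S N) / (INR (S N) + 1))).
  { rewrite <- ln_mult; [f_equal; field; lra | lra | apply Rdiv_lt_0_compat; lra]. }
  pose proof (ln_le_x (INR (S N) / (INR (S N) + 1)) ltac:(apply Rdiv_lt_0_compat; lra)).
  replace (INR (S N) / (INR (S N) + 1) - 1) with (- / (INR (S N) + 1)) in H by (field; lra).
  rewrite (S_INR (S N)). lra.
Qed.

Lemma harmonic_pos N : (1 <= N)%nat -> 0 < harmonic N.
Proof.
  intros. pose proof (harmonic_lower N). assert (1 < INR N + 1) by (pose proof (le_INR 1 N H); simpl in *; lra).
  pose proof (ln_increasing 1 (INR N + 1) ltac:(lra) H1). rewrite ln_1 in H2. lra.
Qed.

Lemma CN_pos N : (1 <= N)%nat -> 0 < CN N.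
Proof.
  intros. rewrite CN_harmonic by auto. apply Rdiv_lt_0_compat. apply harmonic_pos; auto.
  apply lt_0_INR; lia.
Qed.

Lemma harmonic_over_ln : Un_cv (fun N => harmonic N / ln (INR N)) 1.
Proof.
  intros eps Heps.
  destruct (ln_large (/ eps)) as [N0 HN0].
  exists (Nat.max N0 2). intros N HN. unfold Rdist.
  assert (P : 0 < INR N) by (apply lt_0_INR; lia).
  specialize (HN0 N ltac:(lia)).
  assert (Pinv : 0 < / eps) by (apply Rinv_0_lt_compat; lra).
  assert (L : 0 < ln (INR N)) by lra.
  pose proof (harmonic_upper N ltac:(lia)). pose proof (harmonic_lower N).
  pose proof (ln_increasing (INR N) (INR N + 1) P ltac:(lra)).
  replace (harmonic N / ln (INR N) - 1) with ((harmonic N - ln (INR N)) / ln (INR N)) by (field; lra).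
  apply Rabs_def1.
  - apply Rle_lt_trans with (1 / ln (INR N)).
    + unfold Rdiv. apply Rmult_le_compat_r. left; apply Rinv_0_lt_compat; lra. lra.
    + apply Rmult_lt_reg_r with (ln (INR N)); auto. unfold Rdiv. rewrite Rmult_assoc, Rinv_l, Rmult_1_r by lra.
      apply Rmult_lt_compat_l with (r := eps) in HN0; auto. rewrite Rinv_r in HN0 by lra. lra.
  - apply Rlt_le_trans with 0; [lra|]. apply Rdiv_le_0_compat; lra.
Qed.

Theorem CN_asymptotics : Un_cv (fun N => CN N / (ln (INR N) / INR N)) 1.
Proof.
  apply Un_cv_eventually with (v := fun N => harmonic N / ln (INR N)) (N0 := 2%nat).
  - intros N HN. rewrite CN_harmonic by lia.
    assert (0 < INR N) by (apply lt_0_INR; lia). pose proof (ln_pos N HN). field. lra.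
  - apply harmonic_over_ln.
Qed.

Lemma CN_cv0 : Un_cv CN 0.
Proof.
  apply (Un_cv_squeeze0 _ (fun N => (1 + ln (INR N)) / INR N) 1%nat); [|apply log_over_id_cv0].
  intros N HN. pose proof (CN_pos N HN). rewrite Rabs_right by lra.
  rewrite CN_harmonic by auto. unfold Rdiv. apply Rmult_le_compat_r.
  - left; apply Rinv_0_lt_compat, lt_0_INR; lia.
  - apply harmonic_upper; auto.
Qed.

Lemma sum_inv_sq N : (1 <= N)%nat -> sumR (seq 1 N) (fun r => / INR r ^ 2) <= 2 - / INR N.
Proof.
  induction N; intros HN. lia. destruct N. simpl. unfold sumR; simpl. lra.
  rewrite seq_S, sumR_app, sumR_cons, sumR_nil. simpl (1 + S N)%nat.
  specialize (IHN ltac:(lia)).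
  assert (P : 0 < INR (S N)) by (apply lt_0_INR; lia).
  rewrite (S_INR (S N)).
  assert (/ (INR (S N) + 1) ^ 2 <= / INR (S N) - / (INR (S N) + 1)).
  { replace (/ INR (S N) - / (INR (S N) + 1)) with (/ (INR (S N) * (INR (S N) + 1))) by (field; lra).
    apply Rinv_le_contravar. apply Rmult_lt_0_compat; lra. nra. }
  lra.
Qed.

(** The rescaled transition matrix converges to the Kingman generator *)

Definition rescaled_gen (N : nat) (p q : list nat) : R := (trans N p q - indb (leqb p q)) / CN N.

(* averaging coal_prob r = [p = q] + kQ / r + O(1/r^2) over r uniform in [N]:
   the 1/r terms give kQ C_N, the O(1/r^2) terms give O(1/N) = o(C_N) *)
Lemma rescaled_gen_error N p q K0 : (1 <= N)%nat -> 0 <= K0 ->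
  (forall r, (1 <= r)%nat -> Rabs (coal_prob r p q - indb (leqb p q) - kQ p q / INR r) <= K0 / INR r ^ 2) ->
  Rabs (rescaled_gen N p q - kQ p q) <= 2 * K0 / harmonic N.
Proof.
  intros HN K0p HK.
  assert (PN : 0 < INR N) by (apply lt_0_INR; lia).
  assert (PH : 0 < harmonic N) by (apply harmonic_pos; auto).
  set (e := fun r => coal_prob r p q - indb (leqb p q) - kQ p q / INR r).
  assert (E : trans N p q - indb (leqb p q) = / INR N * (kQ p q * harmonic N + sumR (seq 1 N) e)).
  { transitivity (sumR (seq 1 N) (fun r => probR N r * coal_prob r p q) -
                  sumR (seq 1 N) (fun r => probR N r) * indb (leqb p q)).
    { unfold trans. rewrite probR_sum by auto. ring. }
    rewrite <- sumR_scal_r, <- sumR_minus.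
    unfold harmonic. rewrite <- sumR_scal, <- sumR_plus, <- sumR_scal. apply sumR_ext.
    intros r Hr. apply in_seq in Hr. rewrite probR_in by lia.
    unfold e. field. split; apply not_0_INR; lia. }
  unfold rescaled_gen. rewrite E, CN_harmonic by auto.
  replace (/ INR N * (kQ p q * harmonic N + sumR (seq 1 N) e) / (harmonic N / INR N) - kQ p q)
    with (sumR (seq 1 N) e / harmonic N) by (field; lra).
  unfold Rdiv. rewrite Rabs_mult, Rabs_inv, (Rabs_right (harmonic N)) by lra.
  apply Rmult_le_compat_r. left; apply Rinv_0_lt_compat; lra.
  eapply Rle_trans. apply sumR_abs.
  apply Rle_trans with (sumR (seq 1 N) (fun r => K0 * / INR r ^ 2)).
  - apply sumR_le. intros r Hr. apply in_seq in Hr. apply HK; lia.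
  - rewrite sumR_scal. pose proof (sum_inv_sq N HN).
    assert (0 < / INR N) by (apply Rinv_0_lt_compat; lra). nra.
Qed.

Lemma rescaled_gen_cv n p q : In p (parts n) -> In q (parts n) ->
  Un_cv (fun N => rescaled_gen N p q) (kQ p q).
Proof.
  intros Hp Hq. destruct (coal_prob_estimate n p Hp) as [K0 HK].
  assert (K0p : 0 <= K0).
  { specialize (HK q 1%nat Hq (le_n 1)). simpl in HK.
    pose proof (Rabs_pos (coal_prob 1 p q - indb (leqb p q) - kQ p q / 1)). lra. }
  intros eps Heps.
  destruct (ln_large (2 * K0 / eps)) as [N0 HN0]. exists (S N0). intros N HN. unfold Rdist.
  specialize (HN0 N ltac:(lia)). pose proof (harmonic_lower N).
  assert (ln (INR N) < ln (INR N + 1)) by (apply ln_increasing; [apply lt_0_INR|]; lia || lra).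
  assert (0 < harmonic N) by (apply harmonic_pos; lia).
  eapply Rle_lt_trans.
  { apply rescaled_gen_error; [lia|exact K0p|]. intros r Hr; apply HK; auto. }
  apply Rmult_lt_reg_r with (harmonic N); auto. unfold Rdiv. rewrite Rmult_assoc, Rinv_l by lra.
  assert (2 * K0 / eps < harmonic N) by lra. unfold Rdiv in H2.
  apply Rmult_lt_compat_l with (r := eps) in H2; auto.
  rewrite <- Rmult_assoc, (Rmult_comm eps), Rmult_assoc, Rinv_r, Rmult_1_r in H2 by lra. lra.
Qed.

Lemma Int_part_nonneg x : 0 <= x -> (0 <= Int_part x)%Z.
Proof.
  intros. destruct (base_Int_part x) as [A B].
  assert (IZR (Int_part x) > -1) by lra. apply lt_IZR in H0. lia.
Qed.

Lemma Int_part_mono x y : x <= y -> (Int_part x <= Int_part y)%Z.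
Proof.
  intros. destruct (base_Int_part x). destruct (base_Int_part y).
  assert (IZR (Int_part x) < IZR (Int_part y) + 1) by lra.
  rewrite <- plus_IZR in H4. apply lt_IZR in H4. lia.
Qed.

Lemma gen_arg_nonneg N t : (2 <= N)%nat -> 0 <= t -> 0 <= t * INR N / ln (INR N).
Proof.
  intros. apply Rdiv_le_0_compat. apply Rmult_le_pos; auto. apply pos_INR. apply ln_pos; auto.
Qed.

Lemma gen_bounds N t : (2 <= N)%nat -> 0 <= t ->
  t * INR N / ln (INR N) - 1 < INR (gen_of N t) <= t * INR N / ln (INR N).
Proof.
  intros HN Ht. unfold gen_of. pose proof (Int_part_nonneg _ (gen_arg_nonneg N t HN Ht)).
  rewrite (INR_IZR_INZ (Z.to_nat _)), Z2Nat.id by auto.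
  destruct (base_Int_part (t * INR N / ln (INR N))). lra.
Qed.

Lemma gen_mono N t t' : (2 <= N)%nat -> 0 <= t <= t' -> (gen_of N t <= gen_of N t')%nat.
Proof.
  intros HN Ht. unfold gen_of. apply Z2Nat.inj_le; try apply Int_part_nonneg, gen_arg_nonneg; auto; try lra.
  apply Int_part_mono. unfold Rdiv. apply Rmult_le_compat_r. left; apply Rinv_0_lt_compat, ln_pos; auto.
  apply Rmult_le_compat_r. apply pos_INR. lra.
Qed.

Lemma gen_0 N : gen_of N 0 = 0%nat.
Proof.
  unfold gen_of. replace (0 * INR N / ln (INR N)) with (INR 0) by (simpl; unfold Rdiv; ring).
  rewrite Int_part_INR. reflexivity.
Qed.

Lemma gen_sorted_times N obs t0 : (2 <= N)%nat -> 0 <= t0 -> times_ok t0 obs ->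
  gen_sorted (gen_of N) (gen_of N t0) obs.
Proof.
  intros HN. revert t0; induction obs as [|[t pi] obs IH]; intros t0 Ht0 T; simpl in *; auto.
  destruct T as [T1 T2]. split. apply gen_mono; auto. apply IH; auto. lra.
Qed.

Lemma generations_CN_cv t1 t2 : 0 <= t1 <= t2 ->
  Un_cv (fun N => INR (gen_of N t2 - gen_of N t1) * CN N) (t2 - t1).
Proof.
  intros Ht.
  set (err := fun N => INR (gen_of N t2 - gen_of N t1) * CN N - (t2 - t1) * (harmonic N / ln (INR N))).
  apply Un_cv_ext with (fun N => (t2 - t1) * (harmonic N / ln (INR N)) + err N).
  { intros N. unfold err. ring. }
  replace (t2 - t1) with ((t2 - t1) * 1 + 0) at 1 by ring.
  apply CV_plus.
  - apply CV_mult. apply Un_cv_const. apply harmonic_over_ln.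
  - apply (Un_cv_squeeze0 _ CN 2%nat); [|apply CN_cv0].
    intros N HN.
    pose proof (gen_bounds N t1 HN ltac:(lra)). pose proof (gen_bounds N t2 HN ltac:(lra)).
    assert (L : 0 < ln (INR N)) by (apply ln_pos; auto).
    assert (PN : 0 < INR N) by (apply lt_0_INR; lia).
    pose proof (CN_pos N ltac:(lia)).
    set (x := INR N / ln (INR N)).
    assert (Hx : harmonic N / ln (INR N) = x * CN N).
    { unfold x. rewrite CN_harmonic by lia. field. split; lra. }
    unfold err. rewrite Hx, minus_INR by (apply gen_mono; auto; lra).
    replace (t1 * INR N / ln (INR N)) with (t1 * x) in * by (unfold x, Rdiv; ring).
    replace (t2 * INR N / ln (INR N)) with (t2 * x) in * by (unfold x, Rdiv; ring).
    replace ((INR (gen_of N t2) - INR (gen_of N t1)) * CN N - (t2 - t1) * (x * CN N))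
      with ((INR (gen_of N t2) - INR (gen_of N t1) - (t2 - t1) * x) * CN N) by ring.
    rewrite Rabs_mult, (Rabs_right (CN N)) by lra.
    rewrite <- (Rmult_1_l (CN N)) at 2. apply Rmult_le_compat_r; [lra|].
    apply Rabs_le. lra.
Qed.

Fixpoint falling (x : R) (j : nat) : R :=
  match j with O => 1 | S j' => falling x j' * (x - INR j') end.

Definition binom (m j : nat) : R := falling (INR m) j / INR (fact j).

Lemma fact_pos j : 0 < INR (fact j).
Proof. apply lt_0_INR, lt_O_fact. Qed.

Lemma falling_S_shift x j : falling (x + 1) (S j) = (x + 1) * falling x j.
Proof.
  induction j. simpl. ring.
  change (falling (x + 1) (S (S j))) with (falling (x + 1) (S j) * (x + 1 - INR (S j))).
  rewrite IHj. simpl falling. rewrite S_INR. ring.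
Qed.

Lemma binom_pascal m j : binom (S m) (S j) = binom m (S j) + binom m j.
Proof.
  unfold binom. rewrite S_INR, falling_S_shift. simpl falling. rewrite fact_simpl, mult_INR, S_INR.
  pose proof (fact_pos j). pose proof (pos_INR j). field. split; lra.
Qed.

Lemma binom_0 m : binom m 0 = 1.
Proof. unfold binom. simpl. lra. Qed.

Lemma falling_zero m d : falling (INR m) (S m + d) = 0.
Proof.
  induction d. rewrite Nat.add_0_r. simpl. ring.
  replace (S m + S d)%nat with (S (S m + d)) by lia. simpl falling. simpl in IHd. rewrite IHd. ring.
Qed.

Lemma binom_zero m j : (m < j)%nat -> binom m j = 0.
Proof.
  intros H. unfold binom. replace j with (S m + (j - S m))%nat by lia. rewrite falling_zero. unfold Rdiv; ring.
Qed.

Lemma falling_bounds m j : 0 <= falling (INR m) j <= INR m ^ j.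
Proof.
  induction j. simpl; lra.
  destruct (le_lt_dec j m).
  - simpl. assert (0 <= INR m - INR j <= INR m) by (pose proof (le_INR _ _ l); pose proof (pos_INR j); lra).
    split. apply Rmult_le_pos; lra. rewrite Rmult_comm. apply Rmult_le_compat; lra.
  - replace (S j) with (S m + (j - m))%nat by lia. rewrite falling_zero. split. lra. apply pow_le, pos_INR.
Qed.

Fixpoint falling_scaled (y c : R) (j : nat) : R :=
  match j with O => 1 | S j' => falling_scaled y c j' * (y - INR j' * c) end.

Lemma falling_scal x c j : falling x j * c ^ j = falling_scaled (x * c) c j.
Proof. induction j; simpl. ring. rewrite <- IHj. ring. Qed.

(* C(m_N, j) C_N^j -> t^j / j! when m_N C_N -> t and C_N -> 0 *)
Lemma falling_scaled_cv (y c : nat -> R) l : Un_cv y l -> Un_cv c 0 ->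
  forall j, Un_cv (fun N => falling_scaled (y N) (c N) j) (l ^ j).
Proof.
  intros Hy Hc. induction j; cbn [falling_scaled].
  - apply Un_cv_const.
  - replace (l ^ S j) with (l ^ j * l) by (simpl; ring). apply CV_mult; auto.
    pose proof (CV_minus y (fun N => INR j * c N) l (INR j * 0) Hy (CV_mult _ _ _ _ (Un_cv_const (INR j)) Hc)) as H.
    replace (l - INR j * 0) with l in H by ring. exact H.
Qed.

Lemma binom_expansion n (Pi B : list nat -> list nat -> R) (c : R) : c <> 0 ->
  (forall p q, B p q = (Pi p q - indb (leqb p q)) / c) ->
  forall m p q, In p (parts n) ->
  mpow n Pi m p q = sumR (seq 0 (S m)) (fun j => binom m j * c ^ j * mpow n B j p q).
Proof.
  intros Hc HB. induction m; intros p q Hp.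
  - cbn [mpow seq]. rewrite sumR_cons, sumR_nil, binom_0. simpl. ring.
  - cbn [mpow].
    rewrite sumR_ext with (g := fun s => indb (leqb p s) * mpow n Pi m s q + c * (B p s * mpow n Pi m s q))
      by (intros s _; rewrite HB; field_simplify; auto).
    rewrite sumR_plus, sumR_delta_leqb, sumR_scal by (auto; apply NoDup_parts).
    rewrite sumR_ext with (g := fun s => sumR (seq 0 (S m)) (fun j => binom m j * c ^ j * (B p s * mpow n B j s q))).
    2:{ intros s Hs. rewrite IHm by auto. rewrite <- sumR_scal. apply sumR_ext; intros; ring. }
    rewrite sumR_swap, <- sumR_scal.
    rewrite sumR_ext with (g := fun j => binom m j * (c ^ (S j) * mpow n B (S j) p q)).
    2:{ intros j _. cbn [mpow]. rewrite <- !sumR_scal. simpl pow. apply sumR_ext; intros; ring. }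
    rewrite IHm by auto.
    set (T := fun j => c ^ j * mpow n B j p q).
    transitivity (sumR (seq 0 (S m)) (fun j => binom m j * T j) + sumR (seq 0 (S m)) (fun j => binom m j * T (S j))).
    { f_equal; apply sumR_ext; intros; unfold T; ring. }
    transitivity (sumR (seq 0 (S (S m))) (fun j => binom (S m) j * T j)).
    2:{ apply sumR_ext; intros; unfold T; ring. }
    assert (Shift : forall k (f : nat -> R), sumR (seq 0 (S k)) f = f 0%nat + sumR (seq 0 k) (fun j => f (S j))).
    { intros k f. change (seq 0 (S k)) with (0%nat :: seq 1 k). rewrite sumR_cons, <- seq_shift, sumR_map. auto. }
    rewrite (Shift (S m)), (Shift m).
    rewrite sumR_ext with (f := fun j => binom (S m) (S j) * T (S j))
      (g := fun j => binom m (S j) * T (S j) + binom m j * T (S j)) by (intros; rewrite binom_pascal; ring).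
    rewrite sumR_plus, !binom_0, (sumR_seq_last m (fun j => binom m (S j) * T (S j))), binom_zero by lia.
    ring.
Qed.

(** Tannery's theorem for finite sums of growing length *)

Lemma tannery (a : nat -> nat -> R) (A d : nat -> R) (M : nat -> nat) (l : R) :
  (forall j, Un_cv (fun N => a N j) (A j)) ->
  Un_cv (fun J => sum_f_R0 A J) l ->
  (exists N0, forall N j, (N0 <= N)%nat -> Rabs (a N j) <= d j) ->
  (forall eps, 0 < eps -> exists J0, forall J K, (J0 <= J)%nat -> (J <= K)%nat ->
       sumR (seq (S J) (K - J)) d < eps) ->
  (forall N j, (M N < j)%nat -> a N j = 0) ->
  Un_cv (fun N => sum_f_R0 (a N) (M N)) l.
Proof.
  intros Ha HA [N0 Hd] Htail HM eps Heps.
  destruct (Htail (eps / 3)) as [J1 HJ1]; [lra|].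
  destruct (HA (eps / 3)) as [J2 HJ2]; [lra|].
  set (J := Nat.max J1 J2).
  assert (Hfin : Un_cv (fun N => sumR (seq 0 (S J)) (a N)) (sumR (seq 0 (S J)) A))
    by (apply CV_sumR; intros; apply Ha).
  destruct (Hfin (eps / 3)) as [N1 HN1]; [lra|].
  exists (Nat.max N0 N1). intros N HN. unfold Rdist.
  set (K := Nat.max J (M N)).
  assert (E : sum_f_R0 (a N) (M N) = sumR (seq 0 (S J)) (a N) + sumR (seq (S J) (K - J)) (a N)).
  { rewrite sum_f_R0_sumR, <- sumR_app, <- seq_app.
    replace (S J + (K - J))%nat with (S (M N) + (K - M N))%nat by (unfold K; lia).
    rewrite seq_app, sumR_app.
    rewrite (sumR_ext (seq (0 + S (M N)) (K - M N)) (a N) (fun _ => 0)), sumR_zero; [ring|].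
    intros j Hj. apply in_seq in Hj. apply HM. lia. }
  rewrite E.
  specialize (HN1 N ltac:(lia)). unfold Rdist in HN1.
  specialize (HJ2 J ltac:(unfold J; lia)). unfold Rdist in HJ2. rewrite sum_f_R0_sumR in HJ2.
  assert (Tl : Rabs (sumR (seq (S J) (K - J)) (a N)) < eps / 3).
  { eapply Rle_lt_trans. apply sumR_abs. eapply Rle_lt_trans; [|apply (HJ1 J K); unfold J, K; lia].
    apply sumR_le. intros; apply Hd; lia. }
  replace (sumR (seq 0 (S J)) (a N) + sumR (seq (S J) (K - J)) (a N) - l) with
    ((sumR (seq 0 (S J)) (a N) - sumR (seq 0 (S J)) A) + (sumR (seq 0 (S J)) A - l)
     + sumR (seq (S J) (K - J)) (a N)) by ring.
  eapply Rle_lt_trans. apply Rabs_triang. eapply Rle_lt_trans. apply Rplus_le_compat_r, Rabs_triang. lra.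
Qed.

Lemma exp_tail D : forall eps, 0 < eps -> exists J0, forall J K, (J0 <= J)%nat -> (J <= K)%nat ->
  sumR (seq (S J) (K - J)) (fun j => / INR (fact j) * D ^ j) < eps.
Proof.
  intros eps He. destruct (E1_cvg D (eps / 2)) as [J0 HJ0]; [lra|].
  exists J0. intros J K HJ HK.
  assert (E : sumR (seq (S J) (K - J)) (fun j => / INR (fact j) * D ^ j) = E1 D K - E1 D J).
  { unfold E1. rewrite !sum_f_R0_sumR. replace (S K) with (S J + (K - J))%nat by lia.
    rewrite seq_app, sumR_app, Nat.add_0_l. ring. }
  rewrite E. pose proof (HJ0 K ltac:(lia)). pose proof (HJ0 J HJ). unfold Rdist in *.
  apply Rabs_def2 in H. apply Rabs_def2 in H0. lra.
Qed.

Lemma binom_term_bound m j c x T L : 0 <= INR m * c <= T -> 0 <= c -> Rabs x <= L ^ j ->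
  Rabs (binom m j * c ^ j * x) <= / INR (fact j) * (T * L) ^ j.
Proof.
  intros [mc0 mcT] c0 Hx. pose proof (falling_bounds m j). pose proof (fact_pos j).
  assert (B : 0 <= binom m j * c ^ j <= T ^ j * / INR (fact j)).
  { unfold binom. replace (falling (INR m) j / INR (fact j) * c ^ j) with
      (falling (INR m) j * c ^ j * / INR (fact j)) by (unfold Rdiv; ring).
    assert (0 < / INR (fact j)) by (apply Rinv_0_lt_compat; lra).
    split. apply Rmult_le_pos; [apply Rmult_le_pos; [lra|apply pow_le; lra]|lra].
    apply Rmult_le_compat_r; [lra|].
    apply Rle_trans with (INR m ^ j * c ^ j). apply Rmult_le_compat_r. apply pow_le; lra. lra.
    rewrite <- Rpow_mult_distr. apply pow_incr. lra. }
  rewrite Rabs_mult, (Rabs_right (binom m j * c ^ j)) by lra. rewrite Rpow_mult_distr.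
  replace (/ INR (fact j) * (T ^ j * L ^ j)) with ((T ^ j * / INR (fact j)) * L ^ j) by ring.
  apply Rmult_le_compat; try lra. apply Rabs_pos.
Qed.

Lemma mpow_cv_of_cv n (B : nat -> list nat -> list nat -> R) Q q :
  (forall p s, In p (parts n) -> In s (parts n) -> Un_cv (fun N => B N p s) (Q p s)) ->
  forall j p, In p (parts n) -> Un_cv (fun N => mpow n (B N) j p q) (mpow n Q j p q).
Proof.
  intros HB. induction j; intros p Hp.
  - cbn [mpow]. apply Un_cv_const.
  - cbn [mpow]. apply CV_sumR. intros s Hs. apply CV_mult; auto.
Qed.

Lemma mpow_bound n (B : list nat -> list nat -> R) K q : 0 <= K ->
  (forall p s, In p (parts n) -> In s (parts n) -> Rabs (B p s) <= K) ->
  forall j p, In p (parts n) -> Rabs (mpow n B j p q) <= (INR (length (parts n)) * K) ^ j.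
Proof.
  intros K0 HK. induction j; intros p Hp.
  - simpl. unfold indb; destruct leqb; rewrite ?Rabs_R1, ?Rabs_R0; lra.
  - cbn [mpow]. eapply Rle_trans. apply sumR_abs.
    apply Rle_trans with (sumR (parts n) (fun _ => K * (INR (length (parts n)) * K) ^ j)).
    + apply sumR_le. intros s Hs. rewrite Rabs_mult. apply Rmult_le_compat; try apply Rabs_pos; auto.
    + rewrite sumR_const. simpl. lra.
Qed.

Lemma rescaled_gen_bounded n : exists K N0, 0 <= K /\ forall N p s, (N0 <= N)%nat ->
  In p (parts n) -> In s (parts n) -> Rabs (rescaled_gen N p s) <= K.
Proof.
  set (K := 1 + sumR (parts n) (fun p => sumR (parts n) (fun s => Rabs (kQ p s)))).
  assert (HK : forall p s, In p (parts n) -> In s (parts n) -> Rabs (kQ p s) + 1 <= K).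
  { intros p s Hp Hs. unfold K.
    assert (Rabs (kQ p s) <= sumR (parts n) (fun s => Rabs (kQ p s)))
      by (apply (sumR_single_le _ (fun s => Rabs (kQ p s))); auto; intros; apply Rabs_pos).
    assert (sumR (parts n) (fun s => Rabs (kQ p s)) <=
            sumR (parts n) (fun p => sumR (parts n) (fun s => Rabs (kQ p s))))
      by (apply (sumR_single_le _ (fun p => sumR (parts n) (fun s => Rabs (kQ p s)))); auto;
          intros; apply sumR_nonneg; intros; apply Rabs_pos).
    lra. }
  destruct (eventually_list (parts n) (fun p N => forall s, In s (parts n) -> Rabs (rescaled_gen N p s) <= K))
    as [N0 HN0].
  { intros p Hp.
    destruct (eventually_list (parts n) (fun s N => Rabs (rescaled_gen N p s) <= K)) as [N1 H1].
    - intros s Hs. destruct (rescaled_gen_cv n p s Hp Hs 1) as [N2 H2]; [lra|]. exists N2. intros N HN.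
      specialize (H2 N HN). unfold Rdist in H2.
      pose proof (Rabs_triang_inv (rescaled_gen N p s) (kQ p s)). specialize (HK p s Hp Hs). lra.
    - exists N1. intros N HN s Hs. apply H1; auto. }
  exists K, N0. split.
  - unfold K. assert (0 <= sumR (parts n) (fun p => sumR (parts n) (fun s => Rabs (kQ p s)))); [|lra].
    apply sumR_nonneg; intros; apply sumR_nonneg; intros; apply Rabs_pos.
  - intros N p s HN Hp Hs. apply HN0; auto.
Qed.

Section Limit.
Variable n : nat.
Variable P : R -> list nat -> list nat -> R.
Hypothesis HP : forall t p q, 0 <= t -> Un_cv (kexp_partial n t p q) (P t p q).

Lemma trans_power_cv t1 t2 p q : 0 <= t1 <= t2 -> In p (parts n) -> In q (parts n) ->
  Un_cv (fun N => mpow n (trans N) (gen_of N t2 - gen_of N t1) p q) (P (t2 - t1) p q).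
Proof.
  intros Ht Hp Hq.
  set (t := t2 - t1).
  set (m := fun N => (gen_of N t2 - gen_of N t1)%nat).
  set (a := fun N j => binom (m N) j * CN N ^ j * mpow n (rescaled_gen N) j p q).
  apply Un_cv_eventually with (v := fun N => sum_f_R0 (a N) (m N)) (N0 := 1%nat).
  { intros N HN. rewrite sum_f_R0_sumR. unfold a.
    apply (binom_expansion n (trans N) (rescaled_gen N) (CN N)); auto.
    pose proof (CN_pos N HN); lra. }
  destruct (rescaled_gen_bounded n) as [K [N1 [K0 HK]]].
  set (L := INR (length (parts n)) * K).
  assert (Hm : Un_cv (fun N => INR (m N) * CN N) t) by (apply generations_CN_cv; auto).
  destruct (Hm 1) as [N2 HN2]; [lra|].
  apply (tannery a (fun j => t ^ j / INR (fact j) * kQpow n j p q) (fun j => / INR (fact j) * ((t + 1) * L) ^ j) m).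
  - intros j. unfold a.
    apply Un_cv_ext with (fun N => falling_scaled (INR (m N) * CN N) (CN N) j * / INR (fact j) *
                                   mpow n (rescaled_gen N) j p q).
    { intros N. unfold binom. rewrite <- falling_scal. unfold Rdiv. ring. }
    rewrite kQpow_mpow. apply CV_mult.
    2:{ apply (mpow_cv_of_cv n rescaled_gen kQ q); auto. intros; apply (rescaled_gen_cv n); auto. }
    unfold Rdiv. apply CV_mult. apply falling_scaled_cv; auto. apply CN_cv0. apply Un_cv_const.
  - apply HP. unfold t; lra.
  - exists (Nat.max 1 (Nat.max N1 N2)). intros N j HN. unfold a.
    specialize (HN2 N ltac:(lia)). unfold Rdist in HN2.
    pose proof (CN_pos N ltac:(lia)).
    apply binom_term_bound; [|lra|].
    + split. apply Rmult_le_pos; [apply pos_INR|lra]. apply Rabs_def2 in HN2; lra.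
    + apply mpow_bound; auto. intros; apply HK; auto. lia.
  - apply exp_tail.
  - intros N j Hj. unfold a. rewrite binom_zero by auto. ring.
Qed.

Lemma chain_fdd_cv obs t0 p : 0 <= t0 -> times_ok t0 obs -> In p (parts n) ->
  Forall (fun o => In (snd o) (parts n)) obs ->
  Un_cv (fun N => chain_fdd n N (gen_of N) (gen_of N t0) p obs) (kfdd P t0 p obs).
Proof.
  revert t0 p; induction obs as [|[t pi] obs IH]; intros t0 p Ht0 T Hp Fa; simpl.
  - apply Un_cv_const.
  - destruct T as [T1 T2]. inversion Fa as [|? ? Hpi Fa']; subst. simpl in Hpi.
    apply CV_mult. apply trans_power_cv; auto. apply IH; auto. lra.
Qed.

End Limit.

Theorem mainTheorem18 :
  Un_cv (fun N => CN N / (ln (INR N) / INR N)) 1 /\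
  forall (n : nat) (r0 : nat -> nat),
    (forall N : nat, (n <= N)%nat -> (n <= r0 N <= N)%nat) ->
    forall P : R -> list nat -> list nat -> R,
    (forall t p q, 0 <= t -> Un_cv (kexp_partial n t p q) (P t p q)) ->
    forall obs : list (R * list nat),
      times_ok 0 obs ->
      Forall (fun o => In (snd o) (parts n)) obs ->
      Un_cv (fun N => wf_fdd N n (r0 N) obs) (kfdd P 0 (singletons n) obs).
Proof.
  split; [exact CN_asymptotics|].
  intros n r0 Hr0 P HP obs T Fa.
  apply Un_cv_eventually with
    (v := fun N => chain_fdd n N (gen_of N) (gen_of N 0) (singletons n) obs) (N0 := Nat.max 2 n).
  - intros N HN. rewrite gen_0. apply wf_fdd_chain; [lia|apply Hr0; lia| |auto].
    rewrite <- (gen_0 N). apply gen_sorted_times; auto; lia || lra.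
  - apply chain_fdd_cv; auto. lra. apply singletons_in_parts.
Qed.
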